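(* Let $n\ge1$, let $N:[t_0,+\infty)\times\mathbb R^m\to\mathbb R^{m\times m}$ be continuous in $t$ and $n$ times continuously differentiable in $u$ (derivatives continuous in $(t,u)$), and let $\tilde N\in C^n(\mathbb R)$ satisfy $\tilde N^{(k)}(u)\ge0$ for $u\ge0$, $k\in\{0,\dots,n\}$, and $$\sum_{\substack{k_1+\dots+k_m=k\\k_i\ge0}}\frac{k!}{k_1!\cdots k_m!}\Big\|\frac{\partial^kN(t,u)}{\partial u_1^{k_1}\cdots\partial u_m^{k_m}}\Big\|\le\tilde N^{(k)}(\|u\|)\quad\text{for all }(t,u)\in[t_0,\infty)\times\mathbb R^m,\ k\in\{0,\dots,n\}.$$ Then for every $t\ge t_0$: (a) $\|A_k(N(t,\cdot);u_0(t),\dots,u_k(t))\|\le A_k(\tilde N;|||u_0|||_0,\dots,|||u_k|||_0)$ for all $u_0,\dots,u_k\in V_m(\mathbb Q)$, $k\in\{0,\dots,n-1\}$; (b) $\|A_k(N(t,\cdot);u_0(t),\dots,u_k(t))-A_k(N(t,\cdot);P_h(u_0)(t),\dots,P_h(u_k)(t))\|\le h\,A_k(g;|||u_0|||,\dots,|||u_k|||)$ for all $u_0,\dots,u_k\in V_m(\mathbb Q^1_\omega)$, $k\in\{0,\dots,n-2\}$, where $g(u)=\tilde N'(u)u$.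
   Context: $\|\cdot\|$: Euclidean norm on $\mathbb R^m$ and induced operator norm on $\mathbb R^{m\times m}$. $V_m(\mathbb Q)$: bounded piecewise continuous functions $[t_0,\infty)\to\mathbb R^m$, with $|||u|||_0=\sup_{t\ge t_0}\|u(t)\|$. Grid $\hat\omega=\{t_0<t_1<\dots\}$, $t_n\to\infty$, $h=\sup_i(t_i-t_{i-1})$. $V_m(\mathbb Q^1_\omega)$: bounded continuous functions $[t_0,\infty)\to\mathbb R^m$ continuously differentiable on each $(t_{i-1},t_i)$ with finite one-sided derivatives at grid points and bounded derivative; $|||u|||_1=\sup_t\|u'(t)\|$ (sup over points of differentiability/one-sided derivatives), $|||u|||=\max\{|||u|||_0,|||u|||_1\}$. $P_h(u)(t)=u(t_{i-1})$ for $t\in[t_{i-1},t_i)$. Adomian polynomials: $A_k(N(t,\cdot);v_0,\dots,v_k)=\frac1{k!}\frac{d^k}{d\tau^k}N(t,\sum_{i=0}^k\tau^iv_i)|_{\tau=0}$ for $v_i\in\mathbb R^m$; for a real function $f$, $A_k(f;x_0,\dots,x_k)=\frac1{k!}\frac{d^k}{d\tau^k}f(\sum_{i=0}^k\tau^ix_i)|_{\tau=0}$. *)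

From Stdlib Require Import Reals Lra Lia Arith Factorial List Classical ClassicalEpsilon.
Import ListNotations.
Open Scope R_scope.

(** A vector of R^m is a function nat -> R (only indices 0..m-1 matter);
    an m x m matrix is a function nat -> nat -> R (only indices < m matter).
    Coordinate u_1,...,u_m of the paper is index 0,...,m-1 here. *)

Fixpoint rsum (n : nat) (f : nat -> R) : R :=
  match n with O => 0 | S n' => rsum n' f + f n' end.

Definition vec := nat -> R.
Definition mat := nat -> nat -> R.

Definition vnorm (m : nat) (x : vec) : R := sqrt (rsum m (fun i => x i * x i)).
Definition vsub (x y : vec) : vec := fun i => x i - y i.
Definition vadd (x y : vec) : vec := fun i => x i + y i.
Definition vscale (a : R) (x : vec) : vec := fun i => a * x i.
Definition unitv (d : nat) : vec := fun i => if Nat.eqb i d then 1 else 0.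
Definition matvec (m : nat) (M : mat) (x : vec) : vec :=
  fun i => rsum m (fun j => M i j * x j).
Definition msub (A B : mat) : mat := fun i j => A i j - B i j.

Definition sup_of (E : R -> Prop) : R :=
  epsilon (inhabits 0) (fun c => is_lub E c).

Definition opnorm (m : nat) (M : mat) : R :=
  sup_of (fun r => exists x : vec, vnorm m x <= 1 /\ r = vnorm m (matvec m M x)).

Definition kderiv (f : R -> R) (k : nat) (x : R) : R :=
  epsilon (inhabits 0) (fun l => exists F : nat -> R -> R,
     (forall y, F O y = f y) /\
     (forall (j : nat) (y : R), (j < k)%nat -> derivable_pt_lim (F j) y (F (S j) y)) /\
     F k x = l).

Definition acurve (m : nat) (k : nat) (v : nat -> vec) (tau : R) : vec :=
  fun c => rsum (S k) (fun l => tau ^ l * v l c).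

Definition adomN (m : nat) (N : R -> vec -> mat) (t : R) (k : nat) (v : nat -> vec) : mat :=
  fun i j => kderiv (fun tau => N t (acurve m k v tau) i j) k 0 / INR (fact k).

Definition adomR (f : R -> R) (k : nat) (x : nat -> R) : R :=
  kderiv (fun tau => f (rsum (S k) (fun l => tau ^ l * x l))) k 0 / INR (fact k).

(** * Partial derivatives of N with respect to u.
    D s is the iterated partial derivative of N along the list of directions s:
    D [] = N and D (d :: s) = d/du_d (D s). *)
Definition IsPartialDerivs (m n : nat) (t0 : R) (N : R -> vec -> mat)
    (D : list nat -> R -> vec -> mat) : Prop :=
  (forall t u i j, t0 <= t -> D [] t u i j = N t u i j) /\
  (forall (s : list nat) (d : nat) t u i j,
      (length s < n)%nat -> (d < m)%nat -> (i < m)%nat -> (j < m)%nat -> t0 <= t ->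
      derivable_pt_lim (fun tau => D s t (vadd u (vscale tau (unitv d))) i j) 0
                       (D (d :: s) t u i j)).

Definition jointly_continuous (m : nat) (t0 : R) (F : R -> vec -> mat) : Prop :=
  forall t u i j, t0 <= t -> (i < m)%nat -> (j < m)%nat ->
  forall eps, 0 < eps -> exists delta, 0 < delta /\
    forall t' u', t0 <= t' -> Rabs (t' - t) < delta -> vnorm m (vsub u' u) < delta ->
      Rabs (F t' u' i j - F t u i j) < eps.

Definition continuous_in_t (m : nat) (t0 : R) (F : R -> vec -> mat) : Prop :=
  forall t u i j, t0 <= t -> (i < m)%nat -> (j < m)%nat ->
  forall eps, 0 < eps -> exists delta, 0 < delta /\
    forall t', t0 <= t' -> Rabs (t' - t) < delta ->
      Rabs (F t' u i j - F t u i j) < eps.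

Fixpoint mindices (m k : nat) : list (list nat) :=
  match m with
  | O => if Nat.eqb k 0 then [ [] ] else []
  | S m' => flat_map (fun a => map (cons a) (mindices m' (k - a))) (seq 0 (S k))
  end.

Definition lsum {A : Type} (f : A -> R) (l : list A) : R :=
  fold_right (fun a acc => f a + acc) 0 l.

Definition multinom (k : nat) (kk : list nat) : R :=
  INR (fact k) / fold_right (fun a acc => INR (fact a) * acc) 1 kk.

(** directions list for d^k / du_1^{k_1} ... du_m^{k_m}  (coordinate c+idx) *)
Fixpoint dirs_of (kk : list nat) (c : nat) : list nat :=
  match kk with
  | [] => []
  | a :: kk' => repeat c a ++ dirs_of kk' (S c)
  end.

Definition bounded_on (m : nat) (t0 : R) (u : R -> vec) : Prop :=
  exists B, forall t, t0 <= t -> vnorm m (u t) <= B.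

Definition vcont_at (m : nat) (t0 : R) (u : R -> vec) (t : R) : Prop :=
  forall eps, 0 < eps -> exists delta, 0 < delta /\
    forall s, t0 <= s -> Rabs (s - t) < delta -> vnorm m (vsub (u s) (u t)) < eps.

Definition has_right_limit (m : nat) (u : R -> vec) (t : R) : Prop :=
  exists L : vec, forall eps, 0 < eps -> exists delta, 0 < delta /\
    forall s, t < s < t + delta -> vnorm m (vsub (u s) L) < eps.

Definition has_left_limit (m : nat) (u : R -> vec) (t : R) : Prop :=
  exists L : vec, forall eps, 0 < eps -> exists delta, 0 < delta /\
    forall s, t - delta < s < t -> vnorm m (vsub (u s) L) < eps.

Definition piecewise_continuous (m : nat) (t0 : R) (u : R -> vec) : Prop :=
  forall T, exists pts : list R,
    (forall t, t0 <= t <= T -> ~ In t pts -> vcont_at m t0 u t) /\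
    (forall p, In p pts -> t0 <= p -> has_right_limit m u p /\ (t0 < p -> has_left_limit m u p)).

Definition InVQ (m : nat) (t0 : R) (u : R -> vec) : Prop :=
  bounded_on m t0 u /\ piecewise_continuous m t0 u.

Definition norm0 (m : nat) (t0 : R) (u : R -> vec) : R :=
  sup_of (fun r => exists t, t0 <= t /\ r = vnorm m (u t)).

Definition is_grid (t0 : R) (tg : nat -> R) : Prop :=
  tg O = t0 /\ (forall i, tg i < tg (S i)) /\ (forall T, exists i, T < tg i) /\
  (exists H, forall i, tg (S i) - tg i <= H).

Definition grid_h (tg : nat -> R) : R :=
  sup_of (fun r => exists i, r = tg (S i) - tg i).

Definition Ph (tg : nat -> R) (u : R -> vec) (t : R) : vec :=
  u (tg (epsilon (inhabits O) (fun i => tg i <= t < tg (S i)))).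

Definition has_deriv_within (a b : R) (f : R -> R) (t l : R) : Prop :=
  forall eps, 0 < eps -> exists delta, 0 < delta /\
    forall s, a <= s <= b -> s <> t -> Rabs (s - t) < delta ->
      Rabs ((f s - f t) / (s - t) - l) < eps.

Definition vderiv_within (m : nat) (a b : R) (u : R -> vec) (t : R) (d : vec) : Prop :=
  forall c, (c < m)%nat -> has_deriv_within a b (fun s => u s c) t (d c).

Definition InVQ1 (m : nat) (t0 : R) (tg : nat -> R) (u : R -> vec) : Prop :=
  bounded_on m t0 u /\
  (forall t, t0 <= t -> vcont_at m t0 u t) /\
  (forall i, exists du : R -> vec,
      (forall t, tg i <= t <= tg (S i) -> vderiv_within m (tg i) (tg (S i)) u t (du t)) /\
      (forall t, tg i < t < tg (S i) -> forall c, (c < m)%nat ->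
         continuity_pt (fun s => du s c) t)) /\
  (exists B, forall i t d, tg i <= t <= tg (S i) ->
      vderiv_within m (tg i) (tg (S i)) u t d -> vnorm m d <= B).

Definition norm1 (m : nat) (tg : nat -> R) (u : R -> vec) : R :=
  sup_of (fun r => exists i t d, tg i <= t <= tg (S i) /\
            vderiv_within m (tg i) (tg (S i)) u t d /\ r = vnorm m d).

Definition tnorm (m : nat) (t0 : R) (tg : nat -> R) (u : R -> vec) : R :=
  Rmax (norm0 m t0 u) (norm1 m tg u).

(** Well-formedness of the representation: N(t,u) depends only on the
    coordinates u_0..u_{m-1} of u (i.e. N is a function on R^m). *)
Definition depends_on_Rm (m : nat) (N : R -> vec -> mat) : Prop :=
  forall t (u u' : vec), (forall c, (c < m)%nat -> u c = u' c) -> N t u = N t u'.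

From Stdlib Require Import Reals Lra Lia Arith List Permutation ClassicalEpsilon FunctionalExtensionality.
Import ListNotations.
Open Scope R_scope.

(* Pairing with vectors reduces the matrix N to the scalar field
   y^T N x, whose k-th derivative along the curve is, by repeated use of the chain and Leibniz
   rules, a combination of partial derivatives of N contracted with the v_l.  By symmetry of
   mixed partials, the r-th derivative tensor contracted with vectors of norms <= a_l is
   bounded by the multinomial sum of the hypothesis, i.e. by Ñ^(r)(‖u‖) prod a_l.  Running the
   same recursion on the scalar function Ñ(sum_l tau^l a_l), whose derivatives at 0 are
   nonnegative, gives (a) by induction on the order of differentiation.
   For (b) the induction is run on the difference of the two curves: the new direction splits
   into v_l, seen by a difference of the same kind, and v_l - w_l, of norm at most h c_l, and
   the base case is the mean value theorem on the segment [w, v].  The resulting majorant is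
   Ñ'(p) p along p(tau) = sum_l tau^l c_l.  Finally |u(t) - P_h(u)(t)| <= h |||u|||_1 is the
   mean value inequality on a grid cell. *)

(* The Stdlib rules, restated with the functions written as lambda terms. *)
Lemma D_plus f g x a b : derivable_pt_lim f x a -> derivable_pt_lim g x b ->
  derivable_pt_lim (fun y => f y + g y) x (a + b).
Proof. intros. apply (derivable_pt_lim_plus f g); auto. Qed.
Lemma D_minus f g x a b : derivable_pt_lim f x a -> derivable_pt_lim g x b ->
  derivable_pt_lim (fun y => f y - g y) x (a - b).
Proof. intros. apply (derivable_pt_lim_minus f g); auto. Qed.
Lemma D_mult f g x a b : derivable_pt_lim f x a -> derivable_pt_lim g x b ->
  derivable_pt_lim (fun y => f y * g y) x (a * g x + f x * b).
Proof. intros. apply (derivable_pt_lim_mult f g); auto. Qed.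
Lemma D_const c x : derivable_pt_lim (fun _ => c) x 0.
Proof. apply (derivable_pt_lim_const c). Qed.
Lemma D_scal c f x a : derivable_pt_lim f x a ->
  derivable_pt_lim (fun y => c * f y) x (c * a).
Proof. intros. replace (c*a) with (0 * f x + c * a) by ring. apply D_mult; auto. apply D_const. Qed.
Lemma D_comp f g x a b : derivable_pt_lim g x a -> derivable_pt_lim f (g x) b ->
  derivable_pt_lim (fun y => f (g y)) x (b * a).
Proof. intros. apply (derivable_pt_lim_comp g f); auto. Qed.
Lemma D_ext f g x a : (forall y, f y = g y) -> derivable_pt_lim f x a -> derivable_pt_lim g x a.
Proof. intros H H1. replace g with f; auto. apply functional_extensionality; auto. Qed.
Lemma D_eqv f x a b : a = b -> derivable_pt_lim f x a -> derivable_pt_lim f x b.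
Proof. intros ->; auto. Qed.

Lemma rsum_ext n f g : (forall i, (i < n)%nat -> f i = g i) -> rsum n f = rsum n g.
Proof. induction n; simpl; intros; auto. rewrite IHn, H; auto. Qed.
Lemma rsum_plus n f g : rsum n (fun i => f i + g i) = rsum n f + rsum n g.
Proof. induction n; simpl; [ring|rewrite IHn; ring]. Qed.
Lemma rsum_minus n f g : rsum n (fun i => f i - g i) = rsum n f - rsum n g.
Proof. induction n; simpl; [ring|rewrite IHn; ring]. Qed.
Lemma rsum_scal n a f : rsum n (fun i => a * f i) = a * rsum n f.
Proof. induction n; simpl; [ring|rewrite IHn; ring]. Qed.
Lemma rsum_scalr n a f : rsum n (fun i => f i * a) = rsum n f * a.
Proof. induction n; simpl; [ring|rewrite IHn; ring]. Qed.
Lemma rsum_zero n f : (forall i, (i<n)%nat -> f i = 0) -> rsum n f = 0.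
Proof. induction n; simpl; intros; auto. rewrite IHn, H; auto; ring. Qed.
Lemma rsum_le n f g : (forall i, (i < n)%nat -> f i <= g i) -> rsum n f <= rsum n g.
Proof. induction n; simpl; intros; [lra|]. apply Rplus_le_compat; auto. Qed.
Lemma rsum_nonneg n f : (forall i, (i < n)%nat -> 0 <= f i) -> 0 <= rsum n f.
Proof. intros. rewrite <- (rsum_zero n (fun _ => 0)) by auto. apply rsum_le; auto. Qed.
Lemma rsum_abs n f : Rabs (rsum n f) <= rsum n (fun i => Rabs (f i)).
Proof. induction n; simpl. rewrite Rabs_R0; lra.
  eapply Rle_trans; [apply Rabs_triang|]. lra. Qed.
Lemma rsum_swap n p f : rsum n (fun i => rsum p (fun j => f i j)) = rsum p (fun j => rsum n (fun i => f i j)).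
Proof. induction n; simpl. rewrite rsum_zero; auto.
  rewrite IHn, <- rsum_plus. auto. Qed.
Lemma rsum_tele n g : rsum n (fun i => g (S i) - g i) = g n - g O.
Proof. induction n; simpl; [ring|rewrite IHn; ring]. Qed.
Lemma D_rsum n (f : nat -> R -> R) l x :
  (forall i, (i < n)%nat -> derivable_pt_lim (f i) x (l i)) ->
  derivable_pt_lim (fun y => rsum n (fun i => f i y)) x (rsum n l).
Proof. induction n; simpl; intros. apply D_const. apply D_plus; auto. Qed.
Lemma C_rsum n (f : nat -> R -> R) x :
  (forall i, (i < n)%nat -> continuity_pt (f i) x) ->
  continuity_pt (fun y => rsum n (fun i => f i y)) x.
Proof. induction n; simpl; intros. apply continuity_pt_const. intros a b; auto.
  apply (continuity_pt_plus (fun y => rsum n (fun i => f i y)) (f n)); auto. Qed.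
Lemma rsum_S_first n f : rsum (S n) f = f O + rsum n (fun i => f (S i)).
Proof. induction n. simpl; ring.
  change (rsum (S (S n)) f) with (rsum (S n) f + f (S n)). rewrite IHn. simpl. ring. Qed.

(** * Euclidean and operator norms *)

Definition dot (m : nat) (x y : vec) : R := rsum m (fun i => x i * y i).

Lemma sq_nonneg_sum m x : 0 <= rsum m (fun i => x i * x i).
Proof. apply rsum_nonneg; intros; nra. Qed.
Lemma vnorm_nonneg m x : 0 <= vnorm m x.
Proof. apply sqrt_pos. Qed.
Lemma vnorm_sq m x : vnorm m x * vnorm m x = rsum m (fun i => x i * x i).
Proof. apply sqrt_sqrt, sq_nonneg_sum. Qed.

Lemma sqrt_le_of_sq a b : 0 <= b -> a <= b * b -> sqrt a <= b.
Proof. intros. destruct (Rle_or_lt a 0). rewrite sqrt_neg_0 by auto. auto.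
  rewrite <- (sqrt_square b) by auto. apply sqrt_le_1_alt; auto. Qed.
Lemma le_sqrt_of_sq a b : 0 <= a -> a * a <= b -> a <= sqrt b.
Proof. intros. rewrite <- (sqrt_square a) by auto. apply sqrt_le_1_alt; auto. Qed.

Lemma vnorm_coord m x c : (c < m)%nat -> Rabs (x c) <= vnorm m x.
Proof. intros. apply le_sqrt_of_sq. apply Rabs_pos.
  rewrite <- Rabs_mult, Rabs_right by nra.
  induction m. lia. simpl. destruct (Nat.eq_dec c m). subst.
  pose proof (sq_nonneg_sum m x). lra.
  assert (0 <= x m * x m) by nra. assert (c < m)%nat by lia. specialize (IHm H1). lra. Qed.

Lemma quad_expand m x y l : rsum m (fun i => (x i - l * y i) * (x i - l * y i)) =
  rsum m (fun i => x i * x i) - 2 * l * dot m x y + l * l * rsum m (fun i => y i * y i).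
Proof. unfold dot. induction m; simpl. ring. rewrite IHm. ring. Qed.

Lemma cauchy_schwarz_sq m x y : dot m x y * dot m x y <= rsum m (fun i => x i * x i) * rsum m (fun i => y i * y i).
Proof.
  set (A := rsum m (fun i => x i * x i)). set (B := rsum m (fun i => y i * y i)).
  set (C := dot m x y).
  assert (H: forall l, 0 <= A - 2 * l * C + l * l * B).
  { intros. unfold A, B, C. rewrite <- quad_expand. apply rsum_nonneg. intros i _; cbv beta; apply Rle_0_sqr. }
  assert (HA: 0 <= A) by apply sq_nonneg_sum. assert (HB: 0 <= B) by apply sq_nonneg_sum.
  destruct (Req_dec B 0).
  - destruct (Req_dec C 0). rewrite H1; nra.
    specialize (H ((A + 1) / (2 * C))). rewrite H0 in H.
    replace (A - 2 * ((A + 1) / (2 * C)) * C + (A + 1) / (2 * C) * ((A + 1) / (2 * C)) * 0) with (-1) in H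
      by (field; auto). lra.
  - specialize (H (C / B)).
    replace (A - 2 * (C / B) * C + C / B * (C / B) * B) with (A - C * C / B) in H by (field; auto).
    assert (0 < B) by lra.
    assert (C * C / B <= A) by lra.
    apply (Rmult_le_compat_r B) in H2; [|lra].
    replace (C * C / B * B) with (C*C) in H2 by (field; lra). lra.
Qed.

Lemma cauchy_schwarz m x y : Rabs (dot m x y) <= vnorm m x * vnorm m y.
Proof. unfold vnorm. rewrite <- sqrt_mult by apply sq_nonneg_sum.
  apply le_sqrt_of_sq. apply Rabs_pos. rewrite <- Rabs_mult, Rabs_right by nra. apply cauchy_schwarz_sq. Qed.

Lemma vnorm_add m x y : vnorm m (vadd x y) <= vnorm m x + vnorm m y.
Proof. apply sqrt_le_of_sq. pose proof (vnorm_nonneg m x); pose proof (vnorm_nonneg m y); lra.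
  unfold vadd. replace (rsum m (fun i => (x i + y i) * (x i + y i))) with
   (rsum m (fun i => x i * x i) + 2 * dot m x y + rsum m (fun i => y i * y i)).
  2:{ unfold dot. induction m; simpl. ring. rewrite <- IHm. ring. }
  rewrite <- !vnorm_sq. pose proof (cauchy_schwarz m x y). pose proof (Rle_abs (dot m x y)). nra. Qed.

Lemma vnorm_scale m a x : vnorm m (vscale a x) = Rabs a * vnorm m x.
Proof. unfold vnorm, vscale. rewrite <- (sqrt_square (Rabs a)) by apply Rabs_pos.
  rewrite <- sqrt_mult by (try apply sq_nonneg_sum; nra). f_equal.
  rewrite <- Rabs_mult, Rabs_right by nra. rewrite <- rsum_scal. apply rsum_ext; intros; ring. Qed.

Lemma vnorm_ext m x y : (forall c, (c < m)%nat -> x c = y c) -> vnorm m x = vnorm m y.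
Proof. intros. unfold vnorm. f_equal. apply rsum_ext. intros; rewrite H; auto. Qed.

Lemma vnorm_dom m x y : (forall c, (c < m)%nat -> Rabs (x c) <= Rabs (y c)) -> vnorm m x <= vnorm m y.
Proof. intros. unfold vnorm. apply sqrt_le_1_alt. apply rsum_le. intros.
  specialize (H i H0). pose proof (Rabs_pos (x i)).
  assert (E: forall a, a * a = Rabs a * Rabs a) by (intros; rewrite <- Rabs_mult; rewrite Rabs_right; nra).
  rewrite (E (x i)), (E (y i)). apply Rmult_le_compat; auto. Qed.

Lemma vnorm_le_sumabs m x : vnorm m x <= rsum m (fun i => Rabs (x i)).
Proof. apply sqrt_le_of_sq. apply rsum_nonneg; intros; apply Rabs_pos.
  induction m; simpl. lra.
  assert (0 <= rsum m (fun i => Rabs (x i))) by (apply rsum_nonneg; intros; apply Rabs_pos).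
  pose proof (Rabs_pos (x m)). replace (x m * x m) with (Rabs (x m) * Rabs (x m)).
  nra. rewrite <- Rabs_mult. apply Rabs_right. nra. Qed.

Lemma vnorm_zero_coord m x c : vnorm m x <= 0 -> (c < m)%nat -> x c = 0.
Proof. intros. pose proof (vnorm_coord m x c H0). pose proof (Rabs_pos (x c)).
  destruct (Req_dec (x c) 0); auto. pose proof (Rabs_pos_lt _ H3). lra. Qed.

Lemma sup_of_lub E : bound E -> (exists x, E x) -> is_lub E (sup_of E).
Proof. intros. destruct (completeness E H H0) as [c Hc]. unfold sup_of.
  apply (epsilon_spec (inhabits 0) (fun c => is_lub E c)). exists c; auto. Qed.

Lemma sup_of_ub E x : bound E -> E x -> x <= sup_of E.
Proof. intros. destruct (sup_of_lub E H (ex_intro _ x H0)). apply H1; auto. Qed.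

Definition bilin m (y : vec) (M : mat) (x : vec) : R := dot m y (matvec m M x).

Lemma vnorm_zero_vec m : vnorm m (fun _ => 0) = 0.
Proof. unfold vnorm. rewrite rsum_zero. apply sqrt_0. intros; ring. Qed.

Lemma matvec_bound m M x : vnorm m x <= 1 ->
  vnorm m (matvec m M x) <= rsum m (fun i => rsum m (fun j => Rabs (M i j))).
Proof. intros. eapply Rle_trans. apply vnorm_le_sumabs. apply rsum_le. intros i Hi.
  unfold matvec. eapply Rle_trans. apply rsum_abs. apply rsum_le. intros j Hj.
  rewrite Rabs_mult. pose proof (vnorm_coord m x j Hj). pose proof (Rabs_pos (M i j)).
  pose proof (Rabs_pos (x j)). nra. Qed.

Lemma opnorm_lub m M : is_lub (fun r => exists x : vec, vnorm m x <= 1 /\ r = vnorm m (matvec m M x)) (opnorm m M).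
Proof. apply sup_of_lub.
  exists (rsum m (fun i => rsum m (fun j => Rabs (M i j)))). intros r [x [H1 ->]]. apply matvec_bound; auto.
  exists (vnorm m (matvec m M (fun _ => 0))). exists (fun _ => 0). split; auto.
  rewrite vnorm_zero_vec. lra. Qed.

Lemma opnorm_nonneg m M : 0 <= opnorm m M.
Proof. destruct (opnorm_lub m M). eapply Rle_trans; [|apply H].
  2:{ exists (fun _ => 0). split. rewrite vnorm_zero_vec; lra. reflexivity. }
  apply vnorm_nonneg. Qed.

Lemma matvec_scale m M a x : matvec m M (vscale a x) = vscale a (matvec m M x).
Proof. unfold matvec, vscale. apply functional_extensionality. intros i.
  rewrite <- rsum_scal. apply rsum_ext. intros; ring. Qed.

Lemma matvec_norm m M x : vnorm m (matvec m M x) <= opnorm m M * vnorm m x.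
Proof. destruct (Rle_or_lt (vnorm m x) 0).
  - replace (vnorm m (matvec m M x)) with 0. pose proof (opnorm_nonneg m M). pose proof (vnorm_nonneg m x). nra.
    rewrite <- (vnorm_zero_vec m). apply vnorm_ext. intros. unfold matvec. rewrite rsum_zero; auto.
    intros. rewrite (vnorm_zero_coord m x i H); auto. ring.
  - set (a := / vnorm m x). assert (0 < a) by (apply Rinv_0_lt_compat; auto).
    destruct (opnorm_lub m M) as [Hub _].
    assert (vnorm m (matvec m M (vscale a x)) <= opnorm m M).
    { apply Hub. exists (vscale a x). split; auto. rewrite vnorm_scale, Rabs_right by lra.
      unfold a. rewrite Rinv_l; lra. }
    rewrite matvec_scale, vnorm_scale, Rabs_right in H1 by lra. unfold a in H1.
    apply (Rmult_le_compat_r (vnorm m x)) in H1; [|lra].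
    replace (/ vnorm m x * vnorm m (matvec m M x) * vnorm m x) with (vnorm m (matvec m M x)) in H1 by (field; lra).
    lra. Qed.

Lemma bilin_bound m M x y : Rabs (bilin m y M x) <= opnorm m M * vnorm m x * vnorm m y.
Proof. unfold bilin. eapply Rle_trans. apply cauchy_schwarz. pose proof (matvec_norm m M x).
  pose proof (vnorm_nonneg m y). nra. Qed.

Lemma opnorm_le m M B : 0 <= B -> (forall x, vnorm m (matvec m M x) <= B * vnorm m x) -> opnorm m M <= B.
Proof. intros. destruct (opnorm_lub m M). apply H2. intros r [x [Hx ->]].
  pose proof (H0 x). pose proof (vnorm_nonneg m x). nra. Qed.

Lemma opnorm_le_bilin m M B : 0 <= B -> (forall x y, Rabs (bilin m y M x) <= B * vnorm m x * vnorm m y) -> opnorm m M <= B.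
Proof. intros. apply opnorm_le; auto. intros x. set (v := matvec m M x).
  specialize (H0 x v). unfold bilin in H0. fold v in H0. unfold dot in H0.
  rewrite <- vnorm_sq in H0. rewrite Rabs_right in H0 by nra.
  pose proof (vnorm_nonneg m v). pose proof (vnorm_nonneg m x).
  destruct (Req_dec (vnorm m v) 0). rewrite H3. nra.
  assert (vnorm m v * vnorm m v <= (B * vnorm m x) * vnorm m v) by nra.
  apply Rmult_le_reg_r with (vnorm m v); lra. Qed.

(** * Iterated derivatives *)

Definition is_deriv_chain (K : nat) (f : R -> R) (G : nat -> R -> R) : Prop :=
  (forall y, G O y = f y) /\ (forall j y, (j < K)%nat -> derivable_pt_lim (G j) y (G (S j) y)).

Lemma deriv_chain_unique K f F G : is_deriv_chain K f F -> is_deriv_chain K f G -> forall j y, (j <= K)%nat -> F j y = G j y.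
Proof. intros [F0 FD] [G0 GD] j. induction j; intros y Hj. rewrite F0, G0; auto.
  assert (E: G j = F j) by (apply functional_extensionality; intros; symmetry; apply IHj; lia).
  apply (uniqueness_limite (F j) y). apply FD; lia. rewrite <- E. apply GD; lia. Qed.

Lemma deriv_chain_le K J f G : is_deriv_chain K f G -> (J <= K)%nat -> is_deriv_chain J f G.
Proof. intros [H0 H1] HJ. split; auto. intros. apply H1. lia. Qed.

Lemma kderiv_chain K f G j x : is_deriv_chain K f G -> (j <= K)%nat -> kderiv f j x = G j x.
Proof. intros H Hj. unfold kderiv.
  pose proof (epsilon_spec (inhabits 0) (fun l => exists F : nat -> R -> R,
     (forall y, F O y = f y) /\
     (forall (j0 : nat) (y : R), (j0 < j)%nat -> derivable_pt_lim (F j0) y (F (S j0) y)) /\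
     F j x = l)) as Hs.
  destruct Hs as [F [F0 [FD Fx]]].
  - exists (G j x), G. destruct H as [H0 H1]. repeat split; auto. intros; apply H1; lia.
  - rewrite <- Fx. apply (deriv_chain_unique j f F G); auto. split; auto. eapply deriv_chain_le; eauto.
Qed.

Lemma deriv_chain_S K f g G : (forall y, derivable_pt_lim f y (g y)) -> is_deriv_chain K g G ->
  is_deriv_chain (S K) f (fun j => match j with O => f | S j' => G j' end).
Proof. intros Hd [G0 GD]. split; auto. intros [|j] y Hj.
  - simpl. rewrite G0. auto.
  - apply GD. lia. Qed.

Lemma kderiv_succ K f g G j x : (forall y, derivable_pt_lim f y (g y)) -> is_deriv_chain K g G -> (j <= K)%nat ->
  kderiv f (S j) x = kderiv g j x.
Proof. intros. rewrite (kderiv_chain (S K) f _ (S j) x (deriv_chain_S K f g G H H0)) by lia. simpl.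
  rewrite (kderiv_chain K g G j x H0 H1). auto. Qed.

Lemma ex_deriv_chain_S K f g : (forall y, derivable_pt_lim f y (g y)) -> (exists G, is_deriv_chain K g G) ->
  exists G, is_deriv_chain (S K) f G.
Proof. intros H [G HG]. eexists. apply (deriv_chain_S K f g G); eauto. Qed.

Lemma deriv_chain_plus K f g F G : is_deriv_chain K f F -> is_deriv_chain K g G -> is_deriv_chain K (fun y => f y + g y) (fun j y => F j y + G j y).
Proof. intros [F0 FD] [G0 GD]. split. intros; rewrite F0, G0; auto. intros. apply D_plus; auto. Qed.
Lemma deriv_chain_minus K f g F G : is_deriv_chain K f F -> is_deriv_chain K g G -> is_deriv_chain K (fun y => f y - g y) (fun j y => F j y - G j y).
Proof. intros [F0 FD] [G0 GD]. split. intros; rewrite F0, G0; auto. intros. apply D_minus; auto. Qed.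
Lemma deriv_chain_scal K c f F : is_deriv_chain K f F -> is_deriv_chain K (fun y => c * f y) (fun j y => c * F j y).
Proof. intros [F0 FD]. split. intros; rewrite F0; auto. intros. apply D_scal; auto. Qed.
Lemma deriv_chain_rsum K p (f : nat -> R -> R) (F : nat -> nat -> R -> R) :
  (forall i, (i < p)%nat -> is_deriv_chain K (f i) (F i)) ->
  is_deriv_chain K (fun y => rsum p (fun i => f i y)) (fun j y => rsum p (fun i => F i j y)).
Proof. intros H. split. intros; apply rsum_ext; intros; apply H; auto.
  intros. apply D_rsum. intros. apply H; auto. Qed.

Lemma ex_deriv_chain_plus K f g : (exists F, is_deriv_chain K f F) -> (exists G, is_deriv_chain K g G) -> exists H, is_deriv_chain K (fun y => f y + g y) H.
Proof. intros [F HF] [G HG]. eexists; apply deriv_chain_plus; eauto. Qed.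
Lemma ex_deriv_chain_minus K f g : (exists F, is_deriv_chain K f F) -> (exists G, is_deriv_chain K g G) -> exists H, is_deriv_chain K (fun y => f y - g y) H.
Proof. intros [F HF] [G HG]. eexists; apply deriv_chain_minus; eauto. Qed.
Lemma ex_deriv_chain_scal K c f : (exists F, is_deriv_chain K f F) -> exists H, is_deriv_chain K (fun y => c * f y) H.
Proof. intros [F HF]. eexists; apply deriv_chain_scal; eauto. Qed.
Lemma ex_deriv_chain_rsum K p (f : nat -> R -> R) : (forall i, (i < p)%nat -> exists F, is_deriv_chain K (f i) F) ->
  exists H, is_deriv_chain K (fun y => rsum p (fun i => f i y)) H.
Proof. intros H. destruct (choice (fun i F => (i < p)%nat -> is_deriv_chain K (f i) F)) as [F HF].
  { intros i. destruct (lt_dec i p). destruct (H i l) as [F HF]. exists F; auto.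
    exists (fun _ _ => 0). intros; lia. }
  eexists; apply deriv_chain_rsum; eauto. Qed.

Fixpoint binom (n k : nat) : nat :=
  match n, k with
  | _, O => 1%nat
  | O, S _ => 0%nat
  | S n', S k' => (binom n' k' + binom n' (S k'))%nat
  end.
Lemma binom_gt n k : (n < k)%nat -> binom n k = 0%nat.
Proof. revert k; induction n; intros [|k] H; simpl; try lia; auto.
  rewrite !IHn by lia. auto. Qed.

Lemma binom_n0 n : binom n 0 = 1%nat.
Proof. destruct n; auto. Qed.

Lemma pascal_sum j (T : nat -> nat -> R) :
  rsum (S j) (fun i => INR (binom j i) * T (S i) (j - i)%nat) +
  rsum (S j) (fun i => INR (binom j i) * T i (S j - i)%nat) =
  rsum (S (S j)) (fun i => INR (binom (S j) i) * T i (S j - i)%nat).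
Proof.
  rewrite (rsum_S_first (S j) (fun i => INR (binom (S j) i) * T i (S j - i)%nat)).
  rewrite (rsum_ext (S j) (fun i => INR (binom (S j) (S i)) * T (S i) (S j - S i)%nat)
     (fun i => INR (binom j i) * T (S i) (j - i)%nat + INR (binom j (S i)) * T (S i) (j - i)%nat)).
  2:{ intros. simpl binom. rewrite plus_INR. replace (S j - S i)%nat with (j - i)%nat by lia. ring. }
  rewrite rsum_plus.
  rewrite (rsum_S_first j (fun i => INR (binom j i) * T i (S j - i)%nat)).
  change (rsum (S j) (fun i => INR (binom j (S i)) * T (S i) (j - i)%nat)) with
    (rsum j (fun i => INR (binom j (S i)) * T (S i) (j - i)%nat) + INR (binom j (S j)) * T (S j) (j - j)%nat).
  rewrite (rsum_ext j (fun i => INR (binom j (S i)) * T (S i) (S j - S i)%nat)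
     (fun i => INR (binom j (S i)) * T (S i) (j - i)%nat)).
  2:{ intros. replace (S j - S i)%nat with (j - i)%nat by lia. auto. }
  rewrite (binom_gt j (S j)) by lia. rewrite !binom_n0. simpl INR. ring.
Qed.

Definition leibniz (F G : nat -> R -> R) (j : nat) (y : R) : R :=
  rsum (S j) (fun i => INR (binom j i) * (F i y * G (j - i)%nat y)).

Lemma deriv_chain_mult K f g F G : is_deriv_chain K f F -> is_deriv_chain K g G -> is_deriv_chain K (fun y => f y * g y) (leibniz F G).
Proof. intros [F0 FD] [G0 GD]. split.
  - intros. unfold leibniz. simpl. rewrite F0, G0. ring.
  - intros j y Hj. unfold leibniz.
    rewrite <- (pascal_sum j (fun a b => F a y * G b y)). rewrite <- rsum_plus.
    apply D_rsum. intros i Hi.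
    apply D_eqv with (INR (binom j i) * (F (S i) y * G (j - i)%nat y + F i y * G (S j - i)%nat y)).
    ring. apply D_ext with (fun y => INR (binom j i) * (F i y * G (j - i)%nat y)). intros; ring.
    apply D_scal. replace (S j - i)%nat with (S (j - i)) by lia.
    apply D_mult; [apply FD|apply GD]; lia.
Qed.
Lemma ex_deriv_chain_mult K f g : (exists F, is_deriv_chain K f F) -> (exists G, is_deriv_chain K g G) -> exists H, is_deriv_chain K (fun y => f y * g y) H.
Proof. intros [F HF] [G HG]. eexists; apply deriv_chain_mult; eauto. Qed.

Lemma kderiv_mult K f g j x : (exists F, is_deriv_chain K f F) -> (exists G, is_deriv_chain K g G) -> (j <= K)%nat ->
  kderiv (fun y => f y * g y) j x = rsum (S j) (fun i => INR (binom j i) * (kderiv f i x * kderiv g (j - i)%nat x)).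
Proof. intros [F HF] [G HG] Hj. rewrite (kderiv_chain K _ _ j x (deriv_chain_mult K f g F G HF HG) Hj).
  unfold leibniz. apply rsum_ext. intros. rewrite (kderiv_chain K f F i x HF), (kderiv_chain K g G (j - i)%nat x HG) by lia. auto. Qed.

Lemma kderiv_plus K f g j x : (exists F, is_deriv_chain K f F) -> (exists G, is_deriv_chain K g G) -> (j <= K)%nat ->
  kderiv (fun y => f y + g y) j x = kderiv f j x + kderiv g j x.
Proof. intros [F HF] [G HG] Hj. rewrite (kderiv_chain K _ _ j x (deriv_chain_plus K f g F G HF HG) Hj).
  rewrite (kderiv_chain K f F j x HF), (kderiv_chain K g G j x HG) by lia. auto. Qed.
Lemma kderiv_minus K f g j x : (exists F, is_deriv_chain K f F) -> (exists G, is_deriv_chain K g G) -> (j <= K)%nat ->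
  kderiv (fun y => f y - g y) j x = kderiv f j x - kderiv g j x.
Proof. intros [F HF] [G HG] Hj. rewrite (kderiv_chain K _ _ j x (deriv_chain_minus K f g F G HF HG) Hj).
  rewrite (kderiv_chain K f F j x HF), (kderiv_chain K g G j x HG) by lia. auto. Qed.
Lemma kderiv_scal K c f j x : (exists F, is_deriv_chain K f F) -> (j <= K)%nat ->
  kderiv (fun y => c * f y) j x = c * kderiv f j x.
Proof. intros [F HF] Hj. rewrite (kderiv_chain K _ _ j x (deriv_chain_scal K c f F HF) Hj).
  rewrite (kderiv_chain K f F j x HF) by lia. auto. Qed.
Lemma kderiv_rsum K p (f : nat -> R -> R) j x : (forall i, (i < p)%nat -> exists F, is_deriv_chain K (f i) F) -> (j <= K)%nat ->
  kderiv (fun y => rsum p (fun i => f i y)) j x = rsum p (fun i => kderiv (f i) j x).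
Proof. intros H Hj. destruct (choice (fun i F => (i < p)%nat -> is_deriv_chain K (f i) F)) as [F HF].
  { intros i. destruct (lt_dec i p). destruct (H i l) as [F HF]. exists F; auto.
    exists (fun _ _ => 0). intros; lia. }
  rewrite (kderiv_chain K _ _ j x (deriv_chain_rsum K p f F HF) Hj). apply rsum_ext. intros.
  rewrite (kderiv_chain K (f i) (F i) j x); auto. Qed.

Fixpoint falling (p q : nat) : nat := match q with O => 1%nat | S q' => (falling p q' * (p - q'))%nat end.
Lemma deriv_chain_pow K p : is_deriv_chain K (fun y => y ^ p) (fun q y => INR (falling p q) * y ^ (p - q)).
Proof. split. intros; simpl. rewrite Nat.sub_0_r. ring.
  intros q y _. simpl falling. rewrite mult_INR.
  apply D_eqv with (INR (falling p q) * (INR (p - q) * y ^ Init.Nat.pred (p - q))).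
  rewrite Nat.sub_succ_r. ring. apply D_scal. apply derivable_pt_lim_pow. Qed.
Lemma ex_deriv_chain_pow K p : exists G, is_deriv_chain K (fun y => y ^ p) G.
Proof. eexists; apply deriv_chain_pow. Qed.
Lemma kderiv_pow_nonneg p q : 0 <= kderiv (fun y => y ^ p) q 0.
Proof. rewrite (kderiv_chain q _ _ q 0 (deriv_chain_pow q p)) by lia. apply Rmult_le_pos. apply pos_INR.
  apply pow_le; lra. Qed.
Lemma ex_deriv_chain_const K c : exists G, is_deriv_chain K (fun _ => c) G.
Proof. exists (fun j y => match j with O => c | _ => 0 end). split; auto.
  intros [|j] y _; apply D_const. Qed.

(** * Towers of partial derivatives and the chain rule *)

Definition partial_tower (m n : nat) (F : list nat -> vec -> R) : Prop :=
  (forall e d z, (length e < n)%nat -> (d < m)%nat ->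
     derivable_pt_lim (fun tau => F e (vadd z (vscale tau (unitv d)))) 0 (F (d :: e) z)) /\
  (forall e, (1 <= length e <= n)%nat -> forall z eps, 0 < eps -> exists delta, 0 < delta /\
     forall z', vnorm m (vsub z' z) < delta -> Rabs (F e z' - F e z) < eps) /\
  (forall e z z', (length e <= n)%nat -> (forall c, (c < m)%nat -> z c = z' c) -> F e z = F e z').

Lemma vadd_shift z d s h : vadd z (vscale (s + h) (unitv d)) = vadd (vadd z (vscale s (unitv d))) (vscale h (unitv d)).
Proof. apply functional_extensionality; intros; unfold vadd, vscale; ring. Qed.
Lemma vadd_0 z d : vadd z (vscale 0 (unitv d)) = z.
Proof. apply functional_extensionality; intros; unfold vadd, vscale; ring. Qed.

Lemma partial_tower_line m n F e d z s : partial_tower m n F -> (length e < n)%nat -> (d < m)%nat ->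
  derivable_pt_lim (fun sg => F e (vadd z (vscale sg (unitv d)))) s
     (F (d :: e) (vadd z (vscale s (unitv d)))).
Proof. intros [H1 _] He Hd. pose proof (H1 e d (vadd z (vscale s (unitv d))) He Hd) as H.
  intros eps Heps. destruct (H eps Heps) as [del Hdel]. exists del. intros h Hh Hh'.
  specialize (Hdel h Hh Hh'). rewrite Rplus_0_l, vadd_0 in Hdel. rewrite vadd_shift. auto. Qed.

Lemma MVT_origin g g' : (forall s, derivable_pt_lim g s (g' s)) -> forall h, exists sg,
  Rabs sg <= Rabs h /\ g h - g 0 = g' sg * h.
Proof. intros Hd h. destruct (Rtotal_order h 0) as [Hl|[He|Hg]].
  - destruct (MVT_cor2 g g' h 0 Hl) as [c [Hc1 Hc2]]. intros; auto.
    exists c. split. rewrite !Rabs_left by lra. lra. lra.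
  - subst. exists 0. split; [lra|ring].
  - destruct (MVT_cor2 g g' 0 h Hg) as [c [Hc1 Hc2]]. intros; auto.
    exists c. split. rewrite !Rabs_right by lra. lra. lra. Qed.

Lemma continuity_pt_eps f x : continuity_pt f x -> forall eps, 0 < eps -> exists delta, 0 < delta /\
  forall y, Rabs (y - x) < delta -> Rabs (f y - f x) < eps.
Proof. intros H eps Heps. destruct (H eps Heps) as [del [Hdel H2]]. exists del. split; auto.
  intros y Hy. destruct (Req_dec y x). subst. rewrite Rminus_diag, Rabs_R0; auto.
  apply (H2 y). split. split; auto. constructor. simpl. unfold R_dist. auto. Qed.

Lemma derivable_pt_lim_continuity_pt f x l : derivable_pt_lim f x l -> continuity_pt f x.
Proof. intros. apply derivable_continuous_pt. exists l; auto. Qed.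

Definition mix_curve (gam : R -> vec) (p : vec) (c : nat) (tau : R) : vec :=
  fun i => if Nat.ltb i c then gam tau i else p i.

Lemma mix_curve_S gam p c tau : mix_curve gam p (S c) tau = vadd (mix_curve gam p c tau) (vscale (gam tau c - p c) (unitv c)).
Proof. apply functional_extensionality; intros i. unfold mix_curve, vadd, vscale, unitv.
  destruct (Nat.ltb_spec i (S c)); destruct (Nat.ltb_spec i c); destruct (Nat.eqb_spec i c); subst; try lia; ring. Qed.

Lemma curve_vnorm_continuous m gam gam' t0 :
  (forall c, (c < m)%nat -> derivable_pt_lim (fun tau => gam tau c) t0 (gam' c)) ->
  forall eps, 0 < eps -> exists delta, 0 < delta /\ forall tau, Rabs (tau - t0) < delta ->
    vnorm m (vsub (gam tau) (gam t0)) < eps.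
Proof. intros Hd eps Heps.
  assert (Hc: continuity_pt (fun tau => vnorm m (vsub (gam tau) (gam t0))) t0).
  { unfold vnorm. apply (continuity_pt_comp (fun tau => rsum m (fun i => vsub (gam tau) (gam t0) i * vsub (gam tau) (gam t0) i)) sqrt).
    apply C_rsum. intros i Hi. unfold vsub.
    assert (Hci: continuity_pt (fun tau => gam tau i - gam t0 i) t0).
    { apply (continuity_pt_minus (fun tau => gam tau i) (fun _ => gam t0 i)).
      apply (derivable_pt_lim_continuity_pt _ _ (gam' i)); auto. apply continuity_pt_const. intros a b; auto. }
    apply (continuity_pt_mult (fun tau => gam tau i - gam t0 i) (fun tau => gam tau i - gam t0 i)); auto.
    apply continuity_pt_sqrt. apply rsum_nonneg; intros; nra. }
  destruct (continuity_pt_eps _ _ Hc eps Heps) as [del [Hdel H]]. exists del. split; auto.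
  intros tau Ht. specialize (H tau Ht).
  assert (vnorm m (vsub (gam t0) (gam t0)) = 0).
  { rewrite <- (vnorm_zero_vec m). apply vnorm_ext; intros; unfold vsub; ring. }
  rewrite H0, Rminus_0_r, Rabs_right in H by (apply Rle_ge, vnorm_nonneg). auto. Qed.

Lemma derivable_pt_lim_factor f g t0 G L : derivable_pt_lim g t0 G ->
  (forall eps, 0 < eps -> exists delta, 0 < delta /\ forall h, Rabs h < delta ->
     exists a, Rabs (a - L) < eps /\ f (t0 + h) - f t0 = a * (g (t0 + h) - g t0)) ->
  derivable_pt_lim f t0 (L * G).
Proof. intros Hg Hf eps Heps.
  set (e2 := Rmin 1 (eps / (2 * (Rabs L + 1)))).
  set (e1 := eps / (2 * (Rabs G + 2))).
  assert (He2: 0 < e2). { unfold e2. apply Rmin_glb_lt. lra. apply Rdiv_lt_0_compat; auto. pose proof (Rabs_pos L); lra. }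
  assert (He1: 0 < e1). { unfold e1. apply Rdiv_lt_0_compat; auto. pose proof (Rabs_pos G); lra. }
  destruct (Hg e2 He2) as [d1 Hd1]. destruct (Hf e1 He1) as [d2 [Hd2 Hd2']].
  assert (Hd0: 0 < Rmin d1 d2) by (apply Rmin_glb_lt; auto; apply cond_pos).
  exists (mkposreal _ Hd0). intros h Hh Hhd. simpl in Hhd.
  assert (Hh1: Rabs h < d1) by (eapply Rlt_le_trans; [apply Hhd|apply Rmin_l]).
  assert (Hh2: Rabs h < d2) by (eapply Rlt_le_trans; [apply Hhd|apply Rmin_r]).
  destruct (Hd2' h Hh2) as [A [HA ->]].
  specialize (Hd1 h Hh Hh1). set (B := (g (t0 + h) - g t0) / h) in Hd1.
  replace (A * (g (t0 + h) - g t0) / h - L * G) with ((A - L) * B + L * (B - G)) by (unfold B; field; auto).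
  eapply Rle_lt_trans. apply Rabs_triang. rewrite !Rabs_mult.
  assert (HB: Rabs B <= Rabs G + 1).
  { replace B with ((B - G) + G) by ring. eapply Rle_trans. apply Rabs_triang.
    assert (e2 <= 1) by apply Rmin_l. lra. }
  assert (e2 <= eps / (2 * (Rabs L + 1))) by apply Rmin_r.
  pose proof (Rabs_pos (A - L)). pose proof (Rabs_pos L). pose proof (Rabs_pos B). pose proof (Rabs_pos (B - G)).
  pose proof (Rabs_pos G).
  assert (Rabs (A - L) * Rabs B <= e1 * (Rabs G + 1)) by (apply Rmult_le_compat; lra).
  assert (Rabs L * Rabs (B - G) <= Rabs L * e2) by (apply Rmult_le_compat_l; lra).
  assert (e1 * (Rabs G + 1) < eps / 2).
  { assert (E1: e1 * (Rabs G + 2) = eps/2) by (unfold e1; field; lra). nra. }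
  assert (Rabs L * e2 <= eps / 2).
  { assert (E2: (Rabs L + 1) * (eps / (2 * (Rabs L + 1))) = eps / 2) by (field; lra).
    apply Rle_trans with ((Rabs L + 1) * e2). nra.
    rewrite <- E2. apply Rmult_le_compat_l; lra. }
  lra.
Qed.

(* The increment in coordinate [c] is an exact mean-value product whose first factor, a partial
   derivative evaluated between [p] and [gam tau], tends to its value at [p]. *)
Lemma chain_rule_coord m n F e gam gam' t0 c : partial_tower m n F -> (length e < n)%nat -> (c < m)%nat ->
  (forall c, (c < m)%nat -> derivable_pt_lim (fun tau => gam tau c) t0 (gam' c)) ->
  derivable_pt_lim (fun tau => F e (mix_curve gam (gam t0) (S c) tau) - F e (mix_curve gam (gam t0) c tau)) t0
    (F (c :: e) (gam t0) * gam' c).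
Proof.
  intros HPD He Hc Hd. set (p := gam t0).
  apply derivable_pt_lim_factor with (g := fun tau => gam tau c); auto.
  intros eps Heps. destruct HPD as [HF1 [HF2 HF3]].
  destruct (HF2 (c :: e) ltac:(simpl; lia) p eps Heps) as [rho [Hrho Hrho']].
  destruct (curve_vnorm_continuous m gam gam' t0 Hd rho Hrho) as [d [Hd0 Hd']].
  exists d. split; auto. intros h Hh.
  set (q := mix_curve gam p c (t0 + h)).
  destruct (MVT_origin (fun sg => F e (vadd q (vscale sg (unitv c))))
     (fun sg => F (c :: e) (vadd q (vscale sg (unitv c))))) with (gam (t0 + h) c - p c) as [sg [Hsg E]].
  { intros; apply (partial_tower_line m n); auto. split; auto. }
  exists (F (c :: e) (vadd q (vscale sg (unitv c)))). split.
  - apply Hrho'. eapply Rle_lt_trans; [|apply (Hd' (t0 + h)); replace (t0 + h - t0) with h by ring; auto].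
    apply vnorm_dom. intros i Hi. unfold q, p, vsub, vadd, vscale, mix_curve, unitv.
    destruct (Nat.ltb_spec i c); destruct (Nat.eqb_spec i c); subst; try lia.
    + right. f_equal. ring.
    + replace (gam t0 c + sg * 1 - gam t0 c) with sg by ring. auto.
    + replace (gam t0 i + sg * 0 - gam t0 i) with 0 by ring. rewrite Rabs_R0. apply Rabs_pos.
  - assert (E0: F e (mix_curve gam p (S c) t0) - F e (mix_curve gam p c t0) = 0).
    { rewrite mix_curve_S. unfold p. rewrite Rminus_diag, vadd_0. ring. }
    rewrite E0, Rminus_0_r, mix_curve_S. fold q. rewrite vadd_0 in E. fold p. exact E.
Qed.

(* Telescoping over the coordinates, moved one at a time from [gam t0] to [gam tau]. *)
Lemma chain_rule_tower m n F e gam gam' t0 : partial_tower m n F -> (length e < n)%nat ->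
  (forall c, (c < m)%nat -> derivable_pt_lim (fun tau => gam tau c) t0 (gam' c)) ->
  derivable_pt_lim (fun tau => F e (gam tau)) t0 (rsum m (fun d => F (d :: e) (gam t0) * gam' d)).
Proof. intros HPD He Hd. set (p := gam t0).
  apply D_ext with (fun tau => F e p + rsum m (fun c => F e (mix_curve gam p (S c) tau) - F e (mix_curve gam p c tau))).
  { intros tau. rewrite (rsum_tele m (fun c => F e (mix_curve gam p c tau))).
    assert (mix_curve gam p 0 tau = p) by (apply functional_extensionality; intros; unfold mix_curve; destruct (Nat.ltb_spec x 0); [lia|auto]).
    rewrite H. destruct HPD as [_ [_ HF3]]. rewrite (HF3 e (mix_curve gam p m tau) (gam tau)). ring. lia.
    intros. unfold mix_curve. destruct (Nat.ltb_spec c m); [auto|lia]. }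
  apply D_eqv with (0 + rsum m (fun d => F (d :: e) p * gam' d)). ring.
  apply D_plus. apply D_const. apply D_rsum. intros. apply (chain_rule_coord m n); auto. Qed.

(** * Derivatives along the Adomian curve *)

(* [contract m G [x_1; ...; x_r]] applies the r-linear form with coefficients [G [d_1; ...; d_r]]
   to [x_1, ..., x_r]. *)
Fixpoint contract (m : nat) (G : list nat -> R) (xs : list vec) : R :=
  match xs with
  | [] => G []
  | x :: xs' => rsum m (fun d => x d * contract m (fun e => G (d :: e)) xs')
  end.

Lemma contract_ext m xs : forall G G', (forall e, length e = length xs -> G e = G' e) -> contract m G xs = contract m G' xs.
Proof. induction xs; simpl; intros. apply H; auto. apply rsum_ext. intros. f_equal. apply IHxs.
  intros. apply H. simpl; auto. Qed.

Lemma contract_lincomb m xs p (w : nat -> R) (G : nat -> list nat -> R) :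
  contract m (fun e => rsum p (fun i => w i * G i e)) xs = rsum p (fun i => w i * contract m (G i) xs).
Proof. revert w G. induction xs as [|x xs IH]; simpl; intros; auto.
  rewrite (rsum_ext m _ (fun d => rsum p (fun i => w i * (x d * contract m (fun e => G i (d :: e)) xs)))).
  - rewrite rsum_swap. apply rsum_ext; intros. rewrite <- rsum_scal. apply rsum_ext; intros; ring.
  - intros d _. rewrite (IH w (fun i e => G i (d :: e))). rewrite <- rsum_scal. apply rsum_ext; intros; ring.
Qed.

Lemma contract_vsub m xs G v w : contract m G (vsub v w :: xs) = contract m G (v :: xs) - contract m G (w :: xs).
Proof. simpl. rewrite <- rsum_minus. apply rsum_ext; intros. unfold vsub; ring. Qed.

Lemma D_contract m xs : forall (G : R -> list nat -> R) G' t,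
  (forall e, length e = length xs -> derivable_pt_lim (fun tau => G tau e) t (G' e)) ->
  derivable_pt_lim (fun tau => contract m (G tau) xs) t (contract m G' xs).
Proof. induction xs; simpl; intros. apply H; auto. apply D_rsum. intros d Hd.
  apply D_scal. apply (IHxs (fun tau e => G tau (d :: e))). intros. apply H. simpl; auto. Qed.

Fixpoint sum_words_from (c m r : nat) (G : list nat -> R) : R :=
  match r with O => G [] | S r' => rsum m (fun d => sum_words_from c m r' (fun e => G ((c + d)%nat :: e))) end.

Fixpoint prod_vnorm (m : nat) (xs : list vec) : R :=
  match xs with [] => 1 | x :: xs' => vnorm m x * prod_vnorm m xs' end.
Lemma prod_vnorm_nonneg m xs : 0 <= prod_vnorm m xs.
Proof. induction xs; simpl. lra. apply Rmult_le_pos; auto. apply vnorm_nonneg. Qed.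

Lemma sum_words_from_nonneg c m r G : (forall e, 0 <= G e) -> 0 <= sum_words_from c m r G.
Proof. revert G; induction r; simpl; intros; auto. apply rsum_nonneg. intros; apply IHr; auto. Qed.
Lemma sum_words_from_le c m r G H : (forall e, length e = r -> G e <= H e) -> sum_words_from c m r G <= sum_words_from c m r H.
Proof. revert G H; induction r; simpl; intros; auto. apply rsum_le. intros; apply IHr; intros; apply H0; simpl; auto. Qed.
Lemma sum_words_from_scal c m r a G : sum_words_from c m r (fun e => a * G e) = a * sum_words_from c m r G.
Proof. revert G; induction r; simpl; intros; auto. rewrite <- rsum_scal. apply rsum_ext; intros; auto. Qed.

Lemma contract_bound m xs G : Rabs (contract m G xs) <= sum_words_from 0 m (length xs) (fun e => Rabs (G e)) * prod_vnorm m xs.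
Proof. revert G; induction xs; simpl; intros. lra.
  eapply Rle_trans. apply rsum_abs.
  rewrite <- rsum_scalr. apply rsum_le. intros d Hd. rewrite Rabs_mult.
  pose proof (vnorm_coord m a d Hd). pose proof (IHxs (fun e => G (d :: e))).
  pose proof (Rabs_pos (a d)). pose proof (Rabs_pos (contract m (fun e => G (d :: e)) xs)).
  pose proof (prod_vnorm_nonneg m xs).
  assert (0 <= sum_words_from 0 m (length xs) (fun e => Rabs (G (d :: e)))) by (apply sum_words_from_nonneg; intros; apply Rabs_pos).
  apply Rle_trans with (vnorm m a * (sum_words_from 0 m (length xs) (fun e => Rabs (G (d :: e))) * prod_vnorm m xs)).
  apply Rmult_le_compat; auto. nra. Qed.

Definition pcurve (K : nat) (a : nat -> R) (tau : R) : R := rsum (S K) (fun l => tau ^ l * a l).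
Definition pcurve' (K : nat) (a : nat -> R) (tau : R) : R := rsum (S K) (fun l => INR l * tau ^ pred l * a l).

Lemma D_pcurve K a tau : derivable_pt_lim (pcurve K a) tau (pcurve' K a tau).
Proof. unfold pcurve, pcurve'. apply D_rsum. intros l _.
  apply D_ext with (fun y => a l * y ^ l). intros; ring.
  apply D_eqv with (a l * (INR l * tau ^ pred l)). ring. apply D_scal, derivable_pt_lim_pow. Qed.

Lemma acurve_coord m K vs tau c : acurve m K vs tau c = pcurve K (fun l => vs l c) tau.
Proof. reflexivity. Qed.

Lemma pcurve_0 K a : pcurve K a 0 = a O.
Proof. unfold pcurve. rewrite rsum_S_first. rewrite rsum_zero. simpl; ring. intros; simpl; ring. Qed.
Lemma acurve_0 m K vs : acurve m K vs 0 = vs O.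
Proof. apply functional_extensionality; intros c. rewrite acurve_coord, pcurve_0. auto. Qed.

(* The derivative tensor of order [length xs] contracted with [xs], along the curve
   [sum_l tau^l v_l]; for [xs = []] its k-th derivative at 0 is k! times the Adomian polynomial. *)
Definition along_curve m (F : list nat -> vec -> R) K (vs : nat -> vec) (xs : list vec) (tau : R) : R :=
  contract m (fun e => F e (acurve m K vs tau)) xs.

Lemma D_along_curve m n F K vs xs tau : partial_tower m n F -> (length xs < n)%nat ->
  derivable_pt_lim (along_curve m F K vs xs) tau
    (rsum (S K) (fun l => INR l * tau ^ pred l * along_curve m F K vs (vs l :: xs) tau)).
Proof. intros HPD Hl. unfold along_curve.
  eapply D_eqv; [|apply D_contract with (G' := fun e => rsum m (fun d => F (d :: e) (acurve m K vs tau) *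
      pcurve' K (fun l => vs l d) tau))].
  - unfold pcurve'.
    rewrite (contract_ext m xs _ (fun e => rsum m (fun d => rsum (S K) (fun l => (INR l * tau ^ pred l * vs l d) * F (d :: e) (acurve m K vs tau))))).
    2:{ intros. apply rsum_ext. intros. rewrite <- rsum_scal. apply rsum_ext. intros. ring. }
    rewrite (contract_ext m xs _ (fun e => rsum (S K) (fun l => (INR l * tau ^ pred l) *
         rsum m (fun d => vs l d * F (d :: e) (acurve m K vs tau))))).
    2:{ intros. rewrite rsum_swap. apply rsum_ext. intros. rewrite <- rsum_scal. apply rsum_ext. intros. ring. }
    rewrite contract_lincomb. apply rsum_ext. intros l _. f_equal. simpl contract.
    apply (contract_lincomb m xs m (vs l) (fun d e => F (d :: e) (acurve m K vs tau))).
  - intros e He. apply (chain_rule_tower m n); auto. lia. intros. rewrite (functional_extensionality _ _ (fun tau => acurve_coord m K vs tau c)).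
    apply D_pcurve.
Qed.

Lemma ex_deriv_chain_along_curve m n F K vs J : partial_tower m n F -> forall xs, (length xs + J <= n)%nat -> exists G, is_deriv_chain J (along_curve m F K vs xs) G.
Proof. intros HPD. induction J; intros xs Hl.
  - exists (fun _ => along_curve m F K vs xs). split; auto. intros; lia.
  - apply (ex_deriv_chain_S J _ (fun tau => rsum (S K) (fun l => INR l * tau ^ pred l * along_curve m F K vs (vs l :: xs) tau))).
    intros. apply (D_along_curve m n); auto. lia.
    apply ex_deriv_chain_rsum. intros l _. apply ex_deriv_chain_mult. apply ex_deriv_chain_scal. apply ex_deriv_chain_pow. apply IHJ. simpl. lia.
Qed.

Definition curve_weight (j l i : nat) : R := INR (binom j i) * kderiv (fun y => y ^ pred l) i 0.

Lemma curve_weight_nonneg j l i : 0 <= curve_weight j l i.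
Proof. apply Rmult_le_pos. apply pos_INR. apply kderiv_pow_nonneg. Qed.

(* Leibniz rule for [f' = sum_l l tau^(l-1) g_l], the derivative pattern of any function of
   the curve [sum_l tau^l v_l]. *)
Lemma kderiv_S_poly_curve K f (g : nat -> R -> R) J j :
  (forall y, derivable_pt_lim f y (rsum (S K) (fun l => INR l * y ^ pred l * g l y))) ->
  (forall l, (l < S K)%nat -> exists G, is_deriv_chain J (g l) G) -> (j <= J)%nat ->
  kderiv f (S j) 0 =
  rsum (S K) (fun l => INR l * rsum (S j) (fun i => curve_weight j l i * kderiv (g l) (j - i)%nat 0)).
Proof. intros Hd Hg Hj. unfold curve_weight.
  assert (Hc: exists G, is_deriv_chain J (fun y => rsum (S K) (fun l => INR l * y ^ pred l * g l y)) G).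
  { apply ex_deriv_chain_rsum. intros. apply ex_deriv_chain_mult. apply ex_deriv_chain_scal, ex_deriv_chain_pow. auto. }
  destruct Hc as [G HG].
  rewrite (kderiv_succ J f _ G j 0 Hd HG Hj).
  rewrite (kderiv_rsum J). 2:{ intros. apply ex_deriv_chain_mult. apply ex_deriv_chain_scal, ex_deriv_chain_pow. auto. } 2: auto.
  apply rsum_ext. intros l Hl.
  rewrite (kderiv_mult J (fun y => INR l * y ^ pred l) (g l)); auto. 2:{ apply ex_deriv_chain_scal, ex_deriv_chain_pow. }
  rewrite <- rsum_scal. apply rsum_ext. intros i Hi.
  rewrite (kderiv_scal J). 2: apply ex_deriv_chain_pow. 2: lia. ring.
Qed.

Lemma kderiv_0 f x : kderiv f 0 x = f x.
Proof. rewrite (kderiv_chain 0 f (fun _ => f) 0 x). auto. split; auto. intros; lia. auto. Qed.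

Lemma kderiv_S_along_curve m n F K vs xs j : partial_tower m n F -> (length xs + S j <= n)%nat ->
  kderiv (along_curve m F K vs xs) (S j) 0 = rsum (S K) (fun l => INR l * rsum (S j) (fun i =>
    curve_weight j l i * kderiv (along_curve m F K vs (vs l :: xs)) (j - i) 0)).
Proof. intros HPD Hl. apply (kderiv_S_poly_curve K _ _ j j); auto.
  - intros; apply (D_along_curve m n); auto; lia.
  - intros. apply (ex_deriv_chain_along_curve m n); auto; simpl; lia.
Qed.

Lemma kderiv_S_along_curve_sub m n F K vs ws xs j : partial_tower m n F -> (length xs + S j <= n)%nat ->
  kderiv (fun tau => along_curve m F K vs xs tau - along_curve m F K ws xs tau) (S j) 0 =
  rsum (S K) (fun l => INR l * rsum (S j) (fun i => curve_weight j l i *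
    kderiv (fun y => along_curve m F K vs (vs l :: xs) y - along_curve m F K ws (ws l :: xs) y) (j - i) 0)).
Proof. intros HPD Hl. apply (kderiv_S_poly_curve K _ _ j j); auto.
  - intros y. eapply D_eqv; [|apply D_minus; apply (D_along_curve m n); auto; lia].
    rewrite <- rsum_minus. apply rsum_ext; intros; ring.
  - intros. apply ex_deriv_chain_minus; apply (ex_deriv_chain_along_curve m n); auto; simpl; lia.
Qed.

Lemma rsum_abs_le p f g : (forall i, (i < p)%nat -> Rabs (f i) <= g i) -> Rabs (rsum p f) <= rsum p g.
Proof. intros. eapply Rle_trans. apply rsum_abs. apply rsum_le; auto. Qed.

Lemma double_sum_le K j (X Y P : nat -> nat -> R) M : 0 <= M ->
  (forall l i, (l < S K)%nat -> (i < S j)%nat -> 0 <= P l i /\ Rabs (X l i) <= M * Y l i) ->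
  Rabs (rsum (S K) (fun l => INR l * rsum (S j) (fun i => P l i * X l i))) <=
  M * rsum (S K) (fun l => INR l * rsum (S j) (fun i => P l i * Y l i)).
Proof. intros HM H. rewrite <- rsum_scal. apply rsum_abs_le. intros l Hl.
  rewrite Rabs_mult, Rabs_right by (apply Rle_ge, pos_INR).
  replace (M * (INR l * rsum (S j) (fun i => P l i * Y l i))) with (INR l * (M * rsum (S j) (fun i => P l i * Y l i))) by ring.
  apply Rmult_le_compat_l. apply pos_INR. rewrite <- rsum_scal. apply rsum_abs_le. intros i Hi.
  destruct (H l i Hl Hi) as [H1 H2]. rewrite Rabs_mult, Rabs_right by lra.
  replace (M * (P l i * Y l i)) with (P l i * (M * Y l i)) by ring. apply Rmult_le_compat_l; auto. Qed.

Lemma double_sum_nonneg K j (Y : nat -> nat -> R) :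
  (forall l i, (l < S K)%nat -> (i < S j)%nat -> 0 <= Y l i) ->
  0 <= rsum (S K) (fun l => INR l * rsum (S j) (fun i => curve_weight j l i * Y l i)).
Proof. intros H. apply rsum_nonneg. intros l Hl. apply Rmult_le_pos. apply pos_INR.
  apply rsum_nonneg. intros i Hi. apply Rmult_le_pos. apply curve_weight_nonneg. auto. Qed.

Lemma ex_deriv_chain_pcurve J K c : exists G, is_deriv_chain J (pcurve K c) G.
Proof. unfold pcurve. apply ex_deriv_chain_rsum. intros. apply ex_deriv_chain_mult. apply ex_deriv_chain_pow. apply ex_deriv_chain_const. Qed.

(** * Majorants *)

Section Majorant.

Variables (Nt : nat -> R -> R) (n : nat).
Hypothesis HN : forall j x, (j < n)%nat -> derivable_pt_lim (Nt j) x (Nt (S j) x).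
Hypothesis HP : forall k x, (k <= n)%nat -> 0 <= x -> 0 <= Nt k x.

(* [majorant K a 0] is [Nt 0] along the scalar curve [sum_l tau^l a_l], so its k-th derivative
   at 0 is [k! A_k(Nt 0; a_0, ..., a_k)]; [majorant_g] plays the same role for [g u = Nt 1 u * u]. *)
Definition majorant K (a : nat -> R) (r : nat) (tau : R) : R := Nt r (pcurve K a tau).

Definition majorant_g K c r tau := majorant K c (S r) tau * pcurve K c tau.

Lemma D_majorant K a r tau : (r < n)%nat ->
  derivable_pt_lim (majorant K a r) tau
    (rsum (S K) (fun l => INR l * tau ^ pred l * (a l * majorant K a (S r) tau))).
Proof. intros Hr. unfold majorant.
  apply D_eqv with (Nt (S r) (pcurve K a tau) * pcurve' K a tau).
  unfold pcurve'. rewrite <- rsum_scal. apply rsum_ext; intros; ring.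
  apply (D_comp (Nt r) (pcurve K a)). apply D_pcurve. apply HN; auto. Qed.

Lemma ex_deriv_chain_majorant K a J r : (r + J <= n)%nat -> exists G, is_deriv_chain J (majorant K a r) G.
Proof. revert r. induction J; intros r Hr.
  - exists (fun _ => majorant K a r). split; auto. intros; lia.
  - apply (ex_deriv_chain_S J _ (fun tau => rsum (S K) (fun l => INR l * tau ^ pred l * (a l * majorant K a (S r) tau)))).
    intros. apply D_majorant. lia.
    apply ex_deriv_chain_rsum. intros l _. apply ex_deriv_chain_mult. apply ex_deriv_chain_scal. apply ex_deriv_chain_pow.
    apply ex_deriv_chain_scal. apply IHJ. lia.
Qed.

Lemma D_majorant_g K c r tau : (S r < n)%nat ->
  derivable_pt_lim (majorant_g K c r) tau
    (rsum (S K) (fun l => INR l * tau ^ pred l * (c l * (majorant_g K c (S r) tau + majorant K c (S r) tau)))).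
Proof. intros Hr. unfold majorant_g.
  eapply D_eqv; [|apply D_mult; [apply D_majorant; auto|apply D_pcurve]].
  unfold pcurve'. rewrite <- rsum_scalr, <- rsum_scal, <- rsum_plus. apply rsum_ext. intros. ring. Qed.

Lemma ex_deriv_chain_majorant_g K c J r : (S r + J <= n)%nat -> exists G, is_deriv_chain J (majorant_g K c r) G.
Proof. intros. unfold majorant_g. apply ex_deriv_chain_mult. apply ex_deriv_chain_majorant; auto. apply ex_deriv_chain_pcurve. Qed.

Lemma Nt_nondecreasing r x y : (r < n)%nat -> 0 <= x -> x <= y -> Nt r x <= Nt r y.
Proof. intros Hr Hx Hxy. destruct (Req_dec x y). subst; lra.
  destruct (MVT_cor2 (Nt r) (Nt (S r)) x y) as [c [Hc1 Hc2]]. lra. intros; apply HN; auto.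
  assert (0 <= Nt (S r) c) by (apply HP; lia || lra). nra. Qed.

Lemma kderiv_S_majorant K a r j : (r + S j <= n)%nat ->
  kderiv (majorant K a r) (S j) 0 = rsum (S K) (fun l => INR l * rsum (S j) (fun i =>
    curve_weight j l i * (a l * kderiv (majorant K a (S r)) (j - i) 0))).
Proof. intros Hr. rewrite (kderiv_S_poly_curve K _ (fun l y => a l * majorant K a (S r) y) j j).
  - apply rsum_ext. intros l Hl. f_equal. apply rsum_ext. intros i Hi.
    rewrite (kderiv_scal j); auto. apply ex_deriv_chain_majorant; lia. lia.
  - intros; apply D_majorant; lia.
  - intros. apply ex_deriv_chain_scal. apply ex_deriv_chain_majorant; lia.
  - auto.
Qed.

Lemma kderiv_S_majorant_g K c r j : (r + S j + 2 <= n)%nat ->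
  kderiv (majorant_g K c r) (S j) 0 = rsum (S K) (fun l => INR l * rsum (S j) (fun i =>
    curve_weight j l i * (c l * (kderiv (majorant_g K c (S r)) (j - i) 0 + kderiv (majorant K c (S r)) (j - i) 0)))).
Proof. intros Hr.
  assert (HG: forall i, (i <= j)%nat -> exists G, is_deriv_chain i (majorant_g K c (S r)) G)
    by (intros; apply ex_deriv_chain_majorant_g; lia).
  assert (HM: forall i, (i <= j)%nat -> exists G, is_deriv_chain i (majorant K c (S r)) G)
    by (intros; apply ex_deriv_chain_majorant; lia).
  rewrite (kderiv_S_poly_curve K _ (fun l y => c l * (majorant_g K c (S r) y + majorant K c (S r) y)) j j).
  - apply rsum_ext. intros l Hl. f_equal. apply rsum_ext. intros i Hi.
    rewrite (kderiv_scal (j - i)), (kderiv_plus (j - i));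
      try reflexivity; try apply ex_deriv_chain_plus; try apply HG; try apply HM; lia.
  - intros; apply D_majorant_g; lia.
  - intros. apply ex_deriv_chain_scal, ex_deriv_chain_plus; [apply HG | apply HM]; lia.
  - auto.
Qed.

Section Positivity.

Variables (K : nat) (a : nat -> R).
Hypothesis Ha : forall l, (l <= K)%nat -> 0 <= a l.

Lemma kderiv_majorant_nonneg j r : (r + j < n)%nat -> 0 <= kderiv (majorant K a r) j 0.
Proof. revert r. induction j as [j IH] using (well_founded_induction lt_wf). intros r Hr.
  destruct j as [|j].
  - rewrite kderiv_0. unfold majorant. rewrite pcurve_0. apply HP. lia. apply Ha; lia.
  - rewrite kderiv_S_majorant by lia. apply double_sum_nonneg. intros l i Hl Hi.
    apply Rmult_le_pos. apply Ha; lia. apply IH; lia.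
Qed.

Lemma kderiv_majorant_g_nonneg j r : (r + j + 2 <= n)%nat -> 0 <= kderiv (majorant_g K a r) j 0.
Proof. revert r. induction j as [j IH] using (well_founded_induction lt_wf). intros r Hr.
  destruct j as [|j].
  - rewrite kderiv_0. unfold majorant_g, majorant. rewrite pcurve_0.
    apply Rmult_le_pos. apply HP. lia. apply Ha; lia. apply Ha; lia.
  - rewrite kderiv_S_majorant_g by lia. apply double_sum_nonneg. intros l i Hl Hi.
    apply Rmult_le_pos. apply Ha; lia. apply Rplus_le_le_0_compat. apply IH; lia.
    apply kderiv_majorant_nonneg; lia.
Qed.

End Positivity.

Section Comparison.

Variables (m : nat) (F : list nat -> vec -> R) (W : R).
Hypothesis HPD : partial_tower m n F.
Hypothesis HW : 0 <= W.
Hypothesis Hbase : forall xs z, (length xs <= n)%nat ->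
  Rabs (contract m (fun e => F e z) xs) <= W * Nt (length xs) (vnorm m z) * prod_vnorm m xs.

Lemma along_curve_kderiv_bound K vs a :
  (forall l, (l <= K)%nat -> vnorm m (vs l) <= a l) -> (forall l, (l <= K)%nat -> 0 <= a l) ->
  forall j xs, (length xs + j < n)%nat ->
    Rabs (kderiv (along_curve m F K vs xs) j 0) <= W * kderiv (majorant K a (length xs)) j 0 * prod_vnorm m xs.
Proof. intros Hv Ha j. induction j as [j IH] using (well_founded_induction lt_wf). intros xs Hr.
  pose proof (prod_vnorm_nonneg m xs) as Hpr.
  destruct j as [|j].
  - rewrite !kderiv_0. unfold along_curve, majorant. rewrite acurve_0, pcurve_0.
    eapply Rle_trans. apply Hbase. lia. apply Rmult_le_compat_r; auto.
    apply Rmult_le_compat_l; auto. apply Nt_nondecreasing. lia. apply vnorm_nonneg. apply Hv; lia.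
  - rewrite (kderiv_S_along_curve m n) by (auto; lia). rewrite kderiv_S_majorant by lia.
    match goal with |- _ <= W * ?X * prod_vnorm m xs =>
      replace (W * X * prod_vnorm m xs) with ((W * prod_vnorm m xs) * X) by ring end.
    apply double_sum_le. apply Rmult_le_pos; auto. intros l i Hl Hi. split. apply curve_weight_nonneg.
    assert (IHl := IH (j - i)%nat ltac:(lia) (vs l :: xs) ltac:(simpl; lia)). simpl in IHl.
    set (M := kderiv (majorant K a (S (length xs))) (j - i) 0) in *.
    assert (0 <= M) by (apply kderiv_majorant_nonneg; auto; lia).
    eapply Rle_trans; [apply IHl|].
    replace (W * prod_vnorm m xs * (a l * M)) with (W * M * (a l * prod_vnorm m xs)) by ring.
    apply Rmult_le_compat_l. apply Rmult_le_pos; auto. apply Rmult_le_compat_r; auto. apply Hv; lia.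
Qed.

(* Mean value theorem along the segment [w0 + s (v0 - w0)], [0 <= s <= 1], which stays in the
   ball of radius [c0]. *)
Lemma contract_diff_bound h xs v0 w0 c0 : (length xs + 2 <= n)%nat ->
  vnorm m v0 <= c0 -> vnorm m w0 <= c0 -> vnorm m (vsub v0 w0) <= h * c0 ->
  Rabs (contract m (fun e => F e v0) xs - contract m (fun e => F e w0) xs) <=
    h * W * (Nt (S (length xs)) c0 * c0) * prod_vnorm m xs.
Proof. intros Hl Hv Hw Hd.
  set (vs := fun l : nat => match l with O => w0 | _ => vsub v0 w0 end).
  assert (E1: acurve m 1 vs 1 = v0).
  { apply functional_extensionality; intros i. unfold acurve, vs, vsub. simpl. ring. }
  assert (E0: acurve m 1 vs 0 = w0) by (rewrite acurve_0; auto).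
  destruct (MVT_cor2 (along_curve m F 1 vs xs)
    (fun s => rsum 2 (fun l => INR l * s ^ pred l * along_curve m F 1 vs (vs l :: xs) s)) 0 1)
    as [sg [Hsg1 Hsg2]]. lra. intros. apply (D_along_curve m n); auto; lia.
  assert (P1: along_curve m F 1 vs xs 1 = contract m (fun e => F e v0) xs) by (unfold along_curve; rewrite E1; auto).
  assert (P0: along_curve m F 1 vs xs 0 = contract m (fun e => F e w0) xs) by (unfold along_curve; rewrite E0; auto).
  rewrite <- P1, <- P0, Hsg1.
  replace (rsum 2 (fun l => INR l * sg ^ pred l * along_curve m F 1 vs (vs l :: xs) sg) * (1 - 0))
    with (along_curve m F 1 vs (vsub v0 w0 :: xs) sg) by (simpl; ring).
  unfold along_curve. eapply Rle_trans. apply Hbase. simpl; lia. simpl length. simpl prod_vnorm.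
  set (z := acurve m 1 vs sg).
  assert (Hz: vnorm m z <= c0).
  { replace (vnorm m z) with (vnorm m (vadd (vscale (1 - sg) w0) (vscale sg v0))).
    eapply Rle_trans. apply vnorm_add. rewrite !vnorm_scale, !Rabs_right by lra. nra.
    apply vnorm_ext. intros. unfold z, acurve, vs, vadd, vscale, vsub. simpl. ring. }
  assert (Hn1: Nt (S (length xs)) (vnorm m z) <= Nt (S (length xs)) c0)
    by (apply Nt_nondecreasing; auto; [lia | apply vnorm_nonneg]).
  assert (0 <= Nt (S (length xs)) (vnorm m z)) by (apply HP; [lia|apply vnorm_nonneg]).
  pose proof (prod_vnorm_nonneg m xs). pose proof (vnorm_nonneg m (vsub v0 w0)).
  replace (h * W * (Nt (S (length xs)) c0 * c0) * prod_vnorm m xs)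
    with ((W * Nt (S (length xs)) c0) * (h * c0 * prod_vnorm m xs)) by ring.
  apply Rmult_le_compat.
  - apply Rmult_le_pos; auto.
  - apply Rmult_le_pos; auto.
  - apply Rmult_le_compat_l; auto.
  - apply Rmult_le_compat_r; auto.
Qed.

Section Difference.

Variables (K : nat) (vs ws : nat -> vec) (c : nat -> R) (h : R).
Hypothesis Hh : 0 <= h.
Hypothesis Hv : forall l, (l <= K)%nat -> vnorm m (vs l) <= c l.
Hypothesis Hw : forall l, (l <= K)%nat -> vnorm m (ws l) <= c l.
Hypothesis Hd : forall l, (l <= K)%nat -> vnorm m (vsub (vs l) (ws l)) <= h * c l.
Hypothesis Hc : forall l, (l <= K)%nat -> 0 <= c l.

(* The new direction [vs l - ws l] is small ([h c_l]) but the remaining field is only bounded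
   by the [majorant]; the first summand recurses on the same difference. *)
Lemma kderiv_along_curve_cross_split l i xs : (l <= K)%nat -> (length xs + S i + 2 <= n)%nat ->
  kderiv (fun y => along_curve m F K vs (vs l :: xs) y - along_curve m F K ws (ws l :: xs) y) i 0 =
  kderiv (fun y => along_curve m F K vs (vs l :: xs) y - along_curve m F K ws (vs l :: xs) y) i 0 +
  kderiv (along_curve m F K ws (vsub (vs l) (ws l) :: xs)) i 0.
Proof. intros Hl Hr. rewrite <- (kderiv_plus i); auto.
  - f_equal. apply functional_extensionality; intros y. unfold along_curve. rewrite contract_vsub. ring.
  - apply ex_deriv_chain_minus; apply (ex_deriv_chain_along_curve m n); auto; simpl; lia.
  - apply (ex_deriv_chain_along_curve m n); auto; simpl; lia.
Qed.

Lemma along_curve_diff_kderiv_bound j xs : (length xs + j + 2 <= n)%nat ->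
  Rabs (kderiv (fun tau => along_curve m F K vs xs tau - along_curve m F K ws xs tau) j 0) <=
  h * W * kderiv (majorant_g K c (length xs)) j 0 * prod_vnorm m xs.
Proof. revert xs. induction j as [j IH] using (well_founded_induction lt_wf). intros xs Hr.
  pose proof (prod_vnorm_nonneg m xs) as Hpr.
  destruct j as [|j].
  - rewrite !kderiv_0. unfold along_curve, majorant_g, majorant. rewrite !acurve_0, pcurve_0.
    apply contract_diff_bound; auto; try lia; apply Hv || apply Hw || apply Hd; lia.
  - set (r := length xs).
    rewrite (kderiv_S_along_curve_sub m n) by (auto; lia). rewrite kderiv_S_majorant_g by lia.
    match goal with |- _ <= h * W * ?X * prod_vnorm m xs =>
      replace (h * W * X * prod_vnorm m xs) with ((h * W * prod_vnorm m xs) * X) by ring end.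
    apply double_sum_le. repeat apply Rmult_le_pos; auto. intros l i Hl Hi. split. apply curve_weight_nonneg.
    rewrite kderiv_along_curve_cross_split by (auto; lia).
    eapply Rle_trans. apply Rabs_triang.
    assert (H1 := IH (j - i)%nat ltac:(lia) (vs l :: xs) ltac:(simpl; lia)).
    assert (H2 := along_curve_kderiv_bound K ws c Hw Hc (j - i)%nat (vsub (vs l) (ws l) :: xs) ltac:(simpl; lia)).
    simpl in H1, H2. fold r in H1, H2.
    assert (0 <= kderiv (majorant_g K c (S r)) (j - i) 0) by (apply kderiv_majorant_g_nonneg; auto; lia).
    assert (0 <= kderiv (majorant K c (S r)) (j - i) 0) by (apply kderiv_majorant_nonneg; auto; lia).
    pose proof (Hv l ltac:(lia)). pose proof (Hd l ltac:(lia)).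
    pose proof (vnorm_nonneg m (vs l)). pose proof (vnorm_nonneg m (vsub (vs l) (ws l))).
    assert (A1: h * W * kderiv (majorant_g K c (S r)) (j - i) 0 * (vnorm m (vs l) * prod_vnorm m xs) <=
                h * W * kderiv (majorant_g K c (S r)) (j - i) 0 * (c l * prod_vnorm m xs)).
    { apply Rmult_le_compat_l. repeat apply Rmult_le_pos; auto. apply Rmult_le_compat_r; auto. }
    assert (A2: W * kderiv (majorant K c (S r)) (j - i) 0 * (vnorm m (vsub (vs l) (ws l)) * prod_vnorm m xs) <=
                W * kderiv (majorant K c (S r)) (j - i) 0 * (h * c l * prod_vnorm m xs)).
    { apply Rmult_le_compat_l. repeat apply Rmult_le_pos; auto. apply Rmult_le_compat_r; auto. }
    lra.
Qed.

End Difference.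

End Comparison.

End Majorant.

(** * Multinomial counting *)

Definition inrange c m (e : list nat) := forall d, In d e -> (c <= d < c + m)%nat.

Definition perm_invariant c m r (G : list nat -> R) := forall e e', Permutation e e' -> length e = r -> inrange c m e -> G e = G e'.

Lemma sum_words_from_ext c m r : forall G H, (forall e, length e = r -> inrange c m e -> G e = H e) -> sum_words_from c m r G = sum_words_from c m r H.
Proof. induction r; simpl; intros. apply H0; auto. intros d []. apply rsum_ext. intros d Hd. apply IHr.
  intros. apply H0. simpl; auto. intros x [<-|Hx]. lia. apply H2; auto. Qed.

Lemma inrange_app c m e1 e2 : inrange c m e1 -> inrange c m e2 -> inrange c m (e1 ++ e2).
Proof. intros H1 H2 d Hd. apply in_app_or in Hd. destruct Hd; auto. Qed.
Lemma inrange_repeat c m a : (0 < m)%nat -> inrange c m (repeat c a).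
Proof. intros Hm d Hd. apply repeat_spec in Hd. lia. Qed.
Lemma inrange_shift c m e : inrange (S c) m e -> inrange c (S m) e.
Proof. intros H d Hd. specialize (H d Hd). lia. Qed.

Lemma sum_words_from_split c m r : forall G, perm_invariant c (S m) r G ->
  sum_words_from c (S m) r G = rsum (S r) (fun a => INR (binom r a) * sum_words_from (S c) m (r - a) (fun e => G (repeat c a ++ e))).
Proof. induction r; intros G HG.
  - simpl. ring.
  - set (T := fun a k => sum_words_from (S c) m k (fun e => G (repeat c a ++ e))).
    assert (Hinv: forall x, (c <= x < c + S m)%nat -> perm_invariant c (S m) r (fun e => G (x :: e))).
    { intros x Hx e e' Hp Hl Hr. apply HG. constructor; auto. simpl; auto. intros y [<-|Hy]; auto. }
    change (sum_words_from c (S m) (S r) G) with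
      (rsum (S m) (fun d => sum_words_from c (S m) r (fun e => G ((c + d)%nat :: e)))).
    rewrite rsum_S_first, Nat.add_0_r.
    transitivity (rsum (S r) (fun a => INR (binom r a) * T (S a) (r - a)%nat) +
                  rsum (S r) (fun a => INR (binom r a) * T a (S r - a)%nat)); [f_equal | apply pascal_sum].
    + rewrite IHr by (apply Hinv; lia). reflexivity.
    + rewrite (rsum_ext m _ (fun d => rsum (S r) (fun a => INR (binom r a) *
        sum_words_from (S c) m (r - a) (fun e => G ((S c + d)%nat :: repeat c a ++ e))))).
      2:{ intros d Hd. rewrite IHr by (apply Hinv; lia). apply rsum_ext; intros.
          replace (c + S d)%nat with (S c + d)%nat by lia. auto. }
      rewrite rsum_swap. apply rsum_ext. intros a Ha. rewrite rsum_scal. unfold T.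
      replace (S r - a)%nat with (S (r - a)) by lia. f_equal. simpl. apply rsum_ext. intros d Hd.
      (* moving the new letter [S c + d] behind the block of [c]'s is a permutation *)
      apply sum_words_from_ext. intros e He Hre. apply HG.
      * apply Permutation_middle.
      * simpl. rewrite length_app, repeat_length. lia.
      * intros y Hy. simpl in Hy. destruct Hy as [<-|Hy]. lia. apply in_app_or in Hy. destruct Hy as [Hy|Hy].
        apply repeat_spec in Hy. lia. specialize (Hre y Hy). lia.
Qed.

Lemma binom_fact n : forall k, (k <= n)%nat -> INR (binom n k) * INR (fact k) * INR (fact (n - k)) = INR (fact n).
Proof. induction n; intros k Hk.
  - replace k with 0%nat by lia. simpl. ring.
  - destruct k as [|k]. rewrite binom_n0. simpl (fact 0). replace (S n - 0)%nat with (S n) by lia. simpl INR at 1 2. ring.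
    simpl binom. rewrite plus_INR. replace (S n - S k)%nat with (n - k)%nat by lia.
    change (fact (S k)) with ((S k) * fact k)%nat. change (fact (S n)) with ((S n) * fact n)%nat.
    rewrite !mult_INR.
    destruct (Nat.eq_dec k n).
    + subst. assert (E := IHn n (le_n n)). rewrite (binom_gt n (S n)) by lia. simpl (INR 0).
      match type of E with ?X = _ => transitivity ((INR n + 1) * X); [rewrite !S_INR; ring | rewrite E; rewrite S_INR; ring] end.
    + assert (E1 := IHn k ltac:(lia)). assert (E2 := IHn (S k) ltac:(lia)).
      replace (n - k)%nat with (S (n - S k)) by lia. change (fact (S (n - S k))) with (S (n - S k) * fact (n - S k))%nat.
      rewrite mult_INR. replace (n - k)%nat with (S (n - S k)) in E1 by lia.
      change (fact (S (n - S k))) with (S (n - S k) * fact (n - S k))%nat in E1. rewrite mult_INR in E1.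
      change (fact (S k)) with ((S k) * fact k)%nat in E2. rewrite mult_INR in E2.
      replace (INR (S (n - S k))) with (INR n - INR k) in * by (rewrite S_INR, minus_INR by lia; rewrite S_INR; ring).
      rewrite S_INR in *. rewrite S_INR.
      match type of E1 with ?X1 = _ => match type of E2 with ?X2 = _ =>
        match goal with |- ?L = _ => transitivity ((INR k + 1) * X1 + (INR n - INR k) * X2); [ring|] end end end.
      rewrite E1, E2. ring.
Qed.

Lemma lsum_app {A} (f : A -> R) l1 l2 : lsum f (l1 ++ l2) = lsum f l1 + lsum f l2.
Proof. induction l1; simpl. ring. unfold lsum in *; simpl. rewrite IHl1. ring. Qed.
Lemma lsum_flat_map {A B} (f : B -> R) (g : A -> list B) l : lsum f (flat_map g l) = lsum (fun a => lsum f (g a)) l.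
Proof. induction l; simpl. auto. rewrite lsum_app, IHl. auto. Qed.
Lemma lsum_map {A B} (f : B -> R) (g : A -> B) l : lsum f (map g l) = lsum (fun a => f (g a)) l.
Proof. induction l; simpl; auto. unfold lsum in *; simpl. rewrite IHl. auto. Qed.
Lemma lsum_seq f s n : lsum f (seq s n) = rsum n (fun i => f (s + i)%nat).
Proof. revert s; induction n; intros. reflexivity. rewrite rsum_S_first.
  change (lsum f (seq s (S n))) with (f s + lsum f (seq (S s) n)). rewrite IHn.
  rewrite Nat.add_0_r. f_equal. apply rsum_ext. intros. f_equal. lia. Qed.
Lemma lsum_ext {A} (f g : A -> R) l : (forall a, In a l -> f a = g a) -> lsum f l = lsum g l.
Proof. induction l; simpl; intros; auto. unfold lsum in *; simpl. rewrite H, IHl; auto. Qed.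
Lemma lsum_scal {A} a (f : A -> R) l : lsum (fun x => a * f x) l = a * lsum f l.
Proof. induction l; simpl. unfold lsum; simpl; ring. unfold lsum in *; simpl. rewrite IHl. ring. Qed.

Lemma factprod_pos kk : 0 < fold_right (fun a acc => INR (fact a) * acc) 1 kk.
Proof. induction kk; simpl. lra. apply Rmult_lt_0_compat; auto. apply lt_0_INR. apply lt_O_fact. Qed.

Lemma multinom_cons r a kk : (a <= r)%nat -> multinom r (a :: kk) = INR (binom r a) * multinom (r - a) kk.
Proof. intros. unfold multinom. simpl. rewrite <- (binom_fact r a H).
  pose proof (factprod_pos kk). assert (0 < INR (fact a)) by (apply lt_0_INR, lt_O_fact).
  field. split; lra. Qed.

Lemma sum_words_from_multinomial m : forall c r G, perm_invariant c m r G ->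
  sum_words_from c m r G = lsum (fun kk => multinom r kk * G (dirs_of kk c)) (mindices m r).
Proof. induction m; intros c r G HG.
  - destruct r. simpl. unfold lsum, multinom; simpl. field. simpl. unfold lsum; simpl. auto.
  - rewrite sum_words_from_split by auto.
    change (mindices (S m) r) with (flat_map (fun a => map (cons a) (mindices m (r - a))) (seq 0 (S r))). rewrite lsum_flat_map, lsum_seq.
    apply rsum_ext. intros a Ha. simpl (0 + a)%nat. rewrite lsum_map.
    rewrite IHm. rewrite <- lsum_scal. apply lsum_ext. intros kk _. rewrite multinom_cons by lia.
    simpl dirs_of. ring.
    intros e e' Hp Hl Hr. apply HG. apply Permutation_app_head; auto. rewrite length_app, repeat_length. lia.
    apply inrange_app. apply inrange_repeat; lia. apply inrange_shift; auto.
Qed.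

(** * Symmetry of mixed partials *)

Lemma unitv_sq_sum m d : rsum m (fun i => unitv d i * unitv d i) = if Nat.ltb d m then 1 else 0.
Proof. induction m; simpl. destruct d; auto. rewrite IHm. unfold unitv.
  destruct (Nat.ltb_spec d m); destruct (Nat.ltb_spec d (S m)); destruct (Nat.eqb_spec m d); subst; try lia; ring. Qed.

Lemma vnorm_unitv m d : vnorm m (unitv d) <= 1.
Proof. unfold vnorm. rewrite unitv_sq_sum. destruct (Nat.ltb d m); [rewrite sqrt_1|rewrite sqrt_0]; lra. Qed.

Lemma vnorm_two m a b sa sb : vnorm m (vadd (vscale sa (unitv a)) (vscale sb (unitv b))) <= Rabs sa + Rabs sb.
Proof. eapply Rle_trans. apply vnorm_add. rewrite !vnorm_scale.
  pose proof (vnorm_unitv m a). pose proof (vnorm_unitv m b). pose proof (Rabs_pos sa). pose proof (Rabs_pos sb).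
  pose proof (vnorm_nonneg m (unitv a)). pose proof (vnorm_nonneg m (unitv b)). nra. Qed.

Lemma mixed_difference m n F s a b z h : partial_tower m n F -> (length s + 2 <= n)%nat -> (a < m)%nat -> (b < m)%nat ->
  exists xi, vnorm m (vsub xi z) <= 2 * Rabs h /\
    F s (vadd (vadd z (vscale h (unitv b))) (vscale h (unitv a))) - F s (vadd z (vscale h (unitv a)))
    - F s (vadd z (vscale h (unitv b))) + F s z = F (b :: a :: s) xi * (h * h).
Proof. intros HPD Hl Ha Hb. set (zb := vadd z (vscale h (unitv b))).
  destruct (MVT_origin (fun sg => F s (vadd zb (vscale sg (unitv a))) - F s (vadd z (vscale sg (unitv a))))
     (fun sg => F (a :: s) (vadd zb (vscale sg (unitv a))) - F (a :: s) (vadd z (vscale sg (unitv a))))) with h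
    as [s1 [Hs1 E1]].
  { intros. apply D_minus; apply (partial_tower_line m n); auto; lia. }
  rewrite !vadd_0 in E1.
  set (w := vadd z (vscale s1 (unitv a))).
  assert (Ew: vadd zb (vscale s1 (unitv a)) = vadd w (vscale h (unitv b))).
  { apply functional_extensionality; intros; unfold zb, w, vadd, vscale; ring. }
  rewrite Ew in E1. fold w in E1.
  destruct (MVT_origin (fun rh => F (a :: s) (vadd w (vscale rh (unitv b)))) (fun rh => F (b :: a :: s) (vadd w (vscale rh (unitv b))))) with h
    as [r1 [Hr1 E2]].
  { intros. apply (partial_tower_line m n); auto; simpl; lia. }
  rewrite vadd_0 in E2.
  exists (vadd w (vscale r1 (unitv b))). split.
  - replace (vsub (vadd w (vscale r1 (unitv b))) z) with (vadd (vscale s1 (unitv a)) (vscale r1 (unitv b))).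
    eapply Rle_trans. apply vnorm_two. lra.
    apply functional_extensionality; intros; unfold w, vsub, vadd, vscale; ring.
  - rewrite E2 in E1. unfold zb in *.
    match type of E1 with ?L = _ => transitivity L; [ring| rewrite E1; ring] end.
Qed.

Lemma Rabs_lt_all_eq0 x : (forall eps, 0 < eps -> Rabs x < eps) -> x = 0.
Proof. intros H. destruct (Req_dec x 0); auto. specialize (H (Rabs x / 2)).
  assert (0 < Rabs x) by (apply Rabs_pos_lt; auto). lra. Qed.

(* Both mixed partials are limits of the same second difference quotient. *)
Lemma partial_tower_swap m n F s a b z : partial_tower m n F -> (length s + 2 <= n)%nat -> (a < m)%nat -> (b < m)%nat ->
  F (a :: b :: s) z = F (b :: a :: s) z.
Proof. intros HPD Hl Ha Hb. apply Rminus_diag_uniq. apply Rabs_lt_all_eq0. intros eps Heps.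
  destruct HPD as [HF1 [HF2 HF3]].
  destruct (HF2 (a :: b :: s) ltac:(simpl; lia) z (eps/2) ltac:(lra)) as [d1 [Hd1 H1]].
  destruct (HF2 (b :: a :: s) ltac:(simpl; lia) z (eps/2) ltac:(lra)) as [d2 [Hd2 H2]].
  set (h := Rmin d1 d2 / 3). assert (Hh: 0 < h) by (unfold h; assert (0 < Rmin d1 d2) by (apply Rmin_glb_lt; auto); lra).
  assert (hd1: h < d1 / 2) by (unfold h; pose proof (Rmin_l d1 d2); lra).
  assert (hd2: h < d2 / 2) by (unfold h; pose proof (Rmin_r d1 d2); lra).
  destruct (mixed_difference m n F s a b z h (conj HF1 (conj HF2 HF3)) Hl Ha Hb) as [x1 [Hx1 E1]].
  destruct (mixed_difference m n F s b a z h (conj HF1 (conj HF2 HF3)) Hl Hb Ha) as [x2 [Hx2 E2]].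
  assert (Eq: vadd (vadd z (vscale h (unitv b))) (vscale h (unitv a)) = vadd (vadd z (vscale h (unitv a))) (vscale h (unitv b))).
  { apply functional_extensionality; intros; unfold vadd, vscale; ring. }
  rewrite Eq in E1.
  assert (F (b :: a :: s) x1 = F (a :: b :: s) x2).
  { assert (0 < h * h) by nra. apply Rmult_eq_reg_r with (h * h). lra. lra. }
  rewrite Rabs_right in Hx1, Hx2 by lra.
  specialize (H1 x2 ltac:(lra)). specialize (H2 x1 ltac:(lra)).
  replace (F (a :: b :: s) z - F (b :: a :: s) z) with
    (-(F (a :: b :: s) x2 - F (a :: b :: s) z) + (F (b :: a :: s) x1 - F (b :: a :: s) z)) by (rewrite H; ring).
  eapply Rle_lt_trans. apply Rabs_triang. rewrite Rabs_Ropp. lra.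
Qed.

Lemma partial_tower_perm m n F : partial_tower m n F -> forall e e', Permutation e e' -> (length e <= n)%nat -> inrange 0 m e ->
  forall z, F e z = F e' z.
Proof. intros HPD e e' Hp. induction Hp; intros Hl Hr z; auto.
  - assert (Hx: (x < m)%nat) by (specialize (Hr x (or_introl eq_refl)); lia).
    assert (E: F l = F l').
    { apply functional_extensionality. intros. apply IHHp. simpl in Hl; lia. intros d Hd. apply Hr. right; auto. }
    destruct HPD as [HF1 _].
    apply (uniqueness_limite (fun tau => F l (vadd z (vscale tau (unitv x)))) 0).
    + apply HF1; [simpl in Hl; lia | auto].
    + rewrite E. apply HF1; [apply Permutation_length in Hp; simpl in Hl; lia | auto].
  - apply (partial_tower_swap m n). auto. simpl in Hl; lia. specialize (Hr y (or_introl eq_refl)); lia.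
    specialize (Hr x (or_intror (or_introl eq_refl))); lia.
  - rewrite IHHp1 by auto. apply IHHp2. apply Permutation_length in Hp1; lia.
    intros d Hd. apply Hr. apply Permutation_in with l'; auto. apply Permutation_sym; auto.
Qed.

Definition all_lt m (e : list nat) : bool := forallb (fun d => Nat.ltb d m) e.
Lemma all_lt_spec m e : all_lt m e = true <-> inrange 0 m e.
Proof. unfold all_lt, inrange. rewrite forallb_forall. split; intros H d Hd; specialize (H d Hd).
  apply Nat.ltb_lt in H; lia. apply Nat.ltb_lt; lia. Qed.

(* [y^T (D e t z) x]; words with a letter [>= m] are not partial derivatives of [N] and give 0. *)
Definition bilin_field m (D : list nat -> R -> vec -> mat) t (x y : vec) (e : list nat) (z : vec) : R :=
  if all_lt m e then bilin m y (D e t z) x else 0.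

Lemma common_delta (P : nat -> R -> Prop) p : (forall i, (i < p)%nat -> exists d, 0 < d /\ P i d) ->
  (forall i d d', P i d -> 0 < d' <= d -> P i d') -> exists d, 0 < d /\ forall i, (i < p)%nat -> P i d.
Proof. intros H Hm. induction p. exists 1. split. lra. intros; lia.
  destruct IHp as [d1 [Hd1 H1]]. intros; apply H; lia.
  destruct (H p ltac:(lia)) as [d2 [Hd2 H2]].
  exists (Rmin d1 d2). assert (0 < Rmin d1 d2) by (apply Rmin_glb_lt; auto). split; auto.
  intros i Hi. destruct (Nat.eq_dec i p). subst. apply Hm with d2; auto. split; auto. apply Rmin_r.
  apply Hm with d1; auto. apply H1; lia. split; auto. apply Rmin_l. Qed.

Lemma bilin_continuous m (M : vec -> mat) (x y z : vec) :
  (forall i j, (i < m)%nat -> (j < m)%nat -> forall eps, 0 < eps -> exists d, 0 < d /\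
     forall z', vnorm m (vsub z' z) < d -> Rabs (M z' i j - M z i j) < eps) ->
  forall eps, 0 < eps -> exists d, 0 < d /\ forall z', vnorm m (vsub z' z) < d ->
    Rabs (bilin m y (M z') x - bilin m y (M z) x) < eps.
Proof. intros H eps Heps.
  set (Sx := rsum m (fun j => Rabs (x j))). set (Sy := rsum m (fun i => Rabs (y i))).
  assert (HSx: 0 <= Sx) by (apply rsum_nonneg; intros; apply Rabs_pos).
  assert (HSy: 0 <= Sy) by (apply rsum_nonneg; intros; apply Rabs_pos).
  set (e' := eps / (Sy * Sx + 1)). assert (He': 0 < e') by (unfold e'; apply Rdiv_lt_0_compat; nra).
  destruct (common_delta (fun i d => forall j, (j < m)%nat -> forall z', vnorm m (vsub z' z) < d -> Rabs (M z' i j - M z i j) < e') m)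
    as [d [Hd Hall]].
  { intros i Hi. apply common_delta. intros j Hj. apply H; auto. intros j d d' Hdd [Hd' Hdd'] z' Hz'. apply Hdd. lra. }
  { intros i d d' Hdd [Hd' Hdd'] j Hj z' Hz'. apply Hdd; auto. lra. }
  exists d. split; auto. intros z' Hz'.
  assert (E: bilin m y (M z') x - bilin m y (M z) x = rsum m (fun i => y i * rsum m (fun j => (M z' i j - M z i j) * x j))).
  { unfold bilin, dot, matvec. rewrite <- rsum_minus. apply rsum_ext. intros. rewrite <- Rmult_minus_distr_l. f_equal.
    rewrite <- rsum_minus. apply rsum_ext. intros; ring. }
  rewrite E. eapply Rle_lt_trans. apply rsum_abs.
  apply Rle_lt_trans with (rsum m (fun i => Rabs (y i) * (e' * Sx))).
  { apply rsum_le. intros i Hi. rewrite Rabs_mult. apply Rmult_le_compat_l. apply Rabs_pos.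
    eapply Rle_trans. apply rsum_abs. unfold Sx. rewrite <- rsum_scal. apply rsum_le. intros j Hj.
    rewrite Rabs_mult. apply Rmult_le_compat_r. apply Rabs_pos. left. apply Hall; auto. }
  rewrite rsum_scalr. fold Sy.
  assert (Sy * (e' * Sx) = e' * (Sy * Sx)) by ring. rewrite H0.
  unfold e'. apply Rlt_le_trans with (eps / (Sy * Sx + 1) * (Sy * Sx + 1)).
  apply Rmult_lt_compat_l; auto. lra. right. field. nra.
Qed.

Lemma rsum_unit m i f : (i < m)%nat -> rsum m (fun k => unitv i k * f k) = f i.
Proof. induction m; intros H. lia. simpl. unfold unitv at 2. destruct (Nat.eqb_spec m i).
  - subst. rewrite rsum_zero. ring. intros k Hk. unfold unitv. destruct (Nat.eqb_spec k i); [lia|ring].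
  - rewrite IHm by lia. ring. Qed.

Lemma bilin_unitv m M i j : (i < m)%nat -> (j < m)%nat -> bilin m (unitv i) M (unitv j) = M i j.
Proof. intros. unfold bilin, dot, matvec. rewrite (rsum_unit m i (fun k => rsum m (fun j0 => M k j0 * unitv j j0))) by auto.
  rewrite (rsum_ext m _ (fun k => unitv j k * M i k)) by (intros; ring). apply rsum_unit; auto. Qed.

Lemma opnorm_eq m M M' : (forall i j, (i < m)%nat -> (j < m)%nat -> M i j = M' i j) -> opnorm m M = opnorm m M'.
Proof. intros H.
  assert (E: forall x, vnorm m (matvec m M x) = vnorm m (matvec m M' x)).
  { intros. apply vnorm_ext. intros. unfold matvec. apply rsum_ext. intros. rewrite H; auto. }
  apply Rle_antisym; apply opnorm_le; try apply opnorm_nonneg; intros x.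
  rewrite E; apply matvec_norm. rewrite <- E; apply matvec_norm. Qed.

(** * Function spaces and the grid *)

Lemma norm0_ub m t0 u s : bounded_on m t0 u -> t0 <= s -> vnorm m (u s) <= norm0 m t0 u.
Proof. intros [B HB] Hs. apply sup_of_ub. exists B. intros r [t [Ht ->]]. auto. exists s; auto. Qed.
Lemma norm0_nonneg m t0 u : bounded_on m t0 u -> 0 <= norm0 m t0 u.
Proof. intros H. eapply Rle_trans; [|apply (norm0_ub m t0 u t0 H)]. apply vnorm_nonneg. lra. Qed.

Lemma norm1_ub m t0 tg u i s d : InVQ1 m t0 tg u -> tg i <= s <= tg (S i) ->
  vderiv_within m (tg i) (tg (S i)) u s d -> vnorm m d <= norm1 m tg u.
Proof. intros [_ [_ [_ [B HB]]]] Hs Hd. apply sup_of_ub. exists B. intros r [j [t [dd [H1 [H2 ->]]]]]. eapply HB; eauto.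
  exists i, s, d. auto. Qed.

Lemma grid_mono t0 tg : is_grid t0 tg -> forall i, t0 <= tg i.
Proof. intros [H0 [H1 _]] i. induction i. rewrite H0; lra. specialize (H1 i). lra. Qed.

Lemma grid_step t0 tg : is_grid t0 tg -> forall i, tg (S i) - tg i <= grid_h tg.
Proof. intros [_ [_ [_ [H HH]]]] i. apply sup_of_ub. exists H. intros r [j ->]. auto. exists i; auto. Qed.

Lemma grid_h_nonneg t0 tg : is_grid t0 tg -> 0 <= grid_h tg.
Proof. intros Hg. pose proof (grid_step t0 tg Hg 0). destruct Hg as [_ [H1 _]]. specialize (H1 0%nat). lra. Qed.

Lemma grid_index t0 tg t : is_grid t0 tg -> t0 <= t -> exists i, tg i <= t < tg (S i).
Proof. intros Hg Ht. destruct Hg as [H0 [H1 [H2 _]]]. destruct (H2 t) as [N HN].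
  revert HN. induction N; intros HN. rewrite H0 in HN. lra.
  destruct (Rlt_or_le t (tg N)). apply IHN; auto. exists N. split; auto. Qed.

Lemma Ph_spec t0 tg u t : is_grid t0 tg -> t0 <= t -> exists i, tg i <= t < tg (S i) /\ Ph tg u t = u (tg i).
Proof. intros Hg Ht. unfold Ph.
  pose proof (epsilon_spec (inhabits O) (fun i => tg i <= t < tg (S i)) (grid_index t0 tg t Hg Ht)) as H.
  eexists; split; [apply H|reflexivity]. Qed.

Definition clamp (a b s : R) : R := if Rle_dec s a then a else if Rle_dec s b then s else b.
Lemma clamp_in a b s : a <= b -> a <= clamp a b s <= b.
Proof. intros. unfold clamp. destruct (Rle_dec s a); [lra|]. destruct (Rle_dec s b); lra. Qed.
Lemma clamp_id a b s : a <= s <= b -> clamp a b s = s.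
Proof. intros. unfold clamp. destruct (Rle_dec s a). lra. destruct (Rle_dec s b); lra. Qed.
Lemma clamp_dist a b s c : a <= c <= b -> Rabs (clamp a b s - c) <= Rabs (s - c).
Proof. intros. unfold clamp. destruct (Rle_dec s a). rewrite !Rabs_left1 by lra. lra.
  destruct (Rle_dec s b). lra. rewrite !Rabs_right by lra. lra. Qed.

Lemma continuity_pt_of_eps f x : (forall eps, 0 < eps -> exists delta, 0 < delta /\ forall y, Rabs (y - x) < delta -> Rabs (f y - f x) < eps) ->
  continuity_pt f x.
Proof. intros H eps Heps. destruct (H eps Heps) as [d [Hd H']]. exists d. split; auto.
  intros y [_ Hy]. simpl in *. unfold R_dist in *. auto. Qed.

Lemma derivable_pt_lim_of_within a b f c l : a < c < b -> has_deriv_within a b f c l -> derivable_pt_lim f c l.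
Proof. intros Hc H eps Heps. destruct (H eps Heps) as [d [Hd H']].
  assert (Hr: 0 < Rmin d (Rmin (c - a) (b - c))) by (repeat apply Rmin_glb_lt; lra).
  exists (mkposreal _ Hr). intros h Hh Hhd. simpl in Hhd.
  pose proof (Rmin_l d (Rmin (c - a) (b - c))). pose proof (Rmin_r d (Rmin (c - a) (b - c))).
  pose proof (Rmin_l (c - a) (b - c)). pose proof (Rmin_r (c - a) (b - c)).
  assert (Rabs h < c - a) by lra. assert (Rabs h < b - c) by lra.
  apply Rabs_def2 in H4. apply Rabs_def2 in H5.
  specialize (H' (c + h)). replace (c + h - c) with h in H' by ring. apply H'. lra. lra. lra. Qed.

Lemma D_locally_eq f g c l r : 0 < r -> (forall s, Rabs (s - c) < r -> g s = f s) -> derivable_pt_lim f c l -> derivable_pt_lim g c l.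
Proof. intros Hr Hfg H eps Heps. destruct (H eps Heps) as [d Hd].
  assert (Hm: 0 < Rmin d r) by (apply Rmin_glb_lt; auto; apply cond_pos).
  exists (mkposreal _ Hm). intros h Hh Hhd. simpl in Hhd.
  rewrite !Hfg. apply Hd; auto. eapply Rlt_le_trans; [apply Hhd|apply Rmin_l].
  rewrite Rminus_diag, Rabs_R0; auto. replace (c + h - c) with h by ring. eapply Rlt_le_trans; [apply Hhd|apply Rmin_r]. Qed.

Lemma continuity_pt_dot_clamp m u V a t c : a <= c <= t ->
  (forall eps, 0 < eps -> exists delta, 0 < delta /\
     forall s, a <= s <= t -> Rabs (s - c) < delta -> vnorm m (vsub (u s) (u c)) < eps) ->
  continuity_pt (fun s => dot m (u (clamp a t s)) V) c.
Proof. intros Hc Hcont. apply continuity_pt_of_eps. intros eps Heps.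
  pose proof (vnorm_nonneg m V).
  set (e' := eps / (vnorm m V + 1)). assert (He': 0 < e') by (unfold e'; apply Rdiv_lt_0_compat; lra).
  destruct (Hcont e' He') as [d [Hd Hd']]. exists d. split; auto. intros y Hy.
  rewrite (clamp_id a t c) by auto.
  pose proof (clamp_in a t y ltac:(lra)). pose proof (clamp_dist a t y c Hc).
  specialize (Hd' (clamp a t y) ltac:(lra) ltac:(lra)).
  replace (dot m (u (clamp a t y)) V - dot m (u c) V) with (dot m (vsub (u (clamp a t y)) (u c)) V)
    by (unfold dot, vsub; rewrite <- rsum_minus; apply rsum_ext; intros; ring).
  eapply Rle_lt_trans. apply cauchy_schwarz.
  apply Rle_lt_trans with (e' * vnorm m V). apply Rmult_le_compat_r; lra.
  unfold e'. apply Rlt_le_trans with (eps / (vnorm m V + 1) * (vnorm m V + 1)). apply Rmult_lt_compat_l; [exact He'|lra].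
  right. field. lra.
Qed.

(* Scalar mean value theorem for [s |-> <u s, u t - u a>], then Cauchy-Schwarz; clamping to
   [a, t] provides the two-sided continuity at the endpoints that [MVT] asks for. *)
Lemma vector_mean_value_ineq m (u du : R -> vec) a t B : a < t ->
  (forall c, a <= c <= t -> forall eps, 0 < eps -> exists delta, 0 < delta /\
     forall s, a <= s <= t -> Rabs (s - c) < delta -> vnorm m (vsub (u s) (u c)) < eps) ->
  (forall c, a < c < t -> forall k, (k < m)%nat -> derivable_pt_lim (fun s => u s k) c (du c k)) ->
  (forall c, a < c < t -> vnorm m (du c) <= B) ->
  vnorm m (vsub (u t) (u a)) <= (t - a) * B.
Proof. intros Hat Hcont Hder HB.
  set (V := vsub (u t) (u a)). set (phi := fun s => dot m (u (clamp a t s)) V).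
  assert (Hphi: forall c, a < c < t -> derivable_pt_lim phi c (dot m (du c) V)).
  { intros c Hc. apply D_locally_eq with (fun s => dot m (u s) V) (Rmin (c - a) (t - c)). apply Rmin_glb_lt; lra.
    - intros s Hs. unfold phi. rewrite clamp_id; auto.
      pose proof (Rmin_l (c - a) (t - c)). pose proof (Rmin_r (c - a) (t - c)). apply Rabs_def2 in Hs. lra.
    - unfold dot. apply D_rsum. intros k Hk.
      eapply D_eqv; [|apply (D_mult (fun s => u s k) (fun _ => V k) c (du c k) 0)]. ring.
      apply Hder; auto. apply D_const. }
  destruct (MVT phi id a t (fun c P => exist _ _ (Hphi c P)) (fun c P => exist _ 1 (derivable_pt_lim_id c)) Hat)
    as [c [P Hc]].
  { intros c Hc. apply continuity_pt_dot_clamp; auto. }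
  { intros c Hc. apply derivable_pt_lim_continuity_pt with 1. apply derivable_pt_lim_id. }
  simpl in Hc. unfold id, phi in Hc. rewrite !clamp_id in Hc by lra.
  replace (dot m (u t) V - dot m (u a) V) with (vnorm m V * vnorm m V) in Hc
    by (rewrite vnorm_sq; unfold dot, V, vsub; rewrite <- rsum_minus; apply rsum_ext; intros; ring).
  pose proof (HB c P). pose proof (cauchy_schwarz m (du c) V). pose proof (Rle_abs (dot m (du c) V)).
  pose proof (vnorm_nonneg m V). pose proof (vnorm_nonneg m (du c)).
  assert (vnorm m V * vnorm m V <= (t - a) * B * vnorm m V).
  { assert (Hc2: vnorm m V * vnorm m V = (t - a) * dot m (du c) V) by (rewrite Hc; ring). rewrite Hc2.
    replace ((t - a) * B * vnorm m V) with ((t - a) * (B * vnorm m V)) by ring.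
    apply Rmult_le_compat_l. lra. nra. }
  destruct (Req_dec (vnorm m V) 0) as [E|E]. rewrite E. apply Rmult_le_pos; nra.
  apply Rmult_le_reg_r with (vnorm m V). lra. lra.
Qed.

Lemma grid_mean_value_ineq m t0 tg u i t : is_grid t0 tg -> InVQ1 m t0 tg u -> tg i <= t < tg (S i) ->
  vnorm m (vsub (u t) (u (tg i))) <= (t - tg i) * norm1 m tg u.
Proof. intros Hg HU [Hti Htt].
  assert (Ha0: t0 <= tg i) by (apply (grid_mono t0 tg); auto).
  destruct (Req_dec (tg i) t) as [E|Hat].
  { rewrite E, Rminus_diag, Rmult_0_l, <- (vnorm_zero_vec m). right. apply vnorm_ext; intros; unfold vsub; ring. }
  pose proof HU as [_ [Hcont [Hdu _]]]. destruct (Hdu i) as [du [Hd1 _]].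
  apply vector_mean_value_ineq with du; [lra | | |].
  - intros c Hc eps Heps. destruct (Hcont c ltac:(lra) eps Heps) as [d [Hd Hd']].
    exists d. split; auto. intros s Hs. apply Hd'. lra.
  - intros c Hc k Hk. apply derivable_pt_lim_of_within with (tg i) (tg (S i)). lra. apply Hd1; auto. lra.
  - intros c Hc. apply (norm1_ub m t0 tg u i c); auto. lra. apply Hd1. lra.
Qed.

Lemma bilin_msub m y A B x : bilin m y (msub A B) x = bilin m y A x - bilin m y B x.
Proof. unfold bilin, dot, matvec, msub. rewrite <- rsum_minus. apply rsum_ext. intros.
  rewrite <- Rmult_minus_distr_l. f_equal. rewrite <- rsum_minus. apply rsum_ext; intros; ring. Qed.

Lemma opnorm_le_div m M B c : 0 <= B -> 0 < c ->
  (forall x y, Rabs (bilin m y M x * c) <= B * vnorm m x * vnorm m y) -> opnorm m M <= B / c.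
Proof. intros HB Hc H. apply opnorm_le_bilin. { unfold Rdiv. apply Rmult_le_pos; auto. left; apply Rinv_0_lt_compat; auto. }
  intros x y. specialize (H x y). rewrite Rabs_mult, (Rabs_right c) in H by lra.
  apply Rmult_le_reg_r with c; auto. unfold Rdiv.
  replace (B * / c * vnorm m x * vnorm m y * c) with (B * vnorm m x * vnorm m y) by (field; lra). lra.
Qed.

Lemma vnorm_le_tnorm m t0 tg u s : InVQ1 m t0 tg u -> t0 <= s -> vnorm m (u s) <= tnorm m t0 tg u.
Proof. intros [Hb _] Hs. eapply Rle_trans; [|apply Rmax_l]. apply norm0_ub; auto. Qed.

Lemma tnorm_nonneg m t0 tg u : InVQ1 m t0 tg u -> 0 <= tnorm m t0 tg u.
Proof. intros Hu. eapply Rle_trans; [apply (vnorm_nonneg m (u t0))|]. apply (vnorm_le_tnorm m t0 tg u t0 Hu). lra. Qed.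

Lemma vnorm_Ph_le_tnorm m t0 tg u t : is_grid t0 tg -> InVQ1 m t0 tg u -> t0 <= t ->
  vnorm m (Ph tg u t) <= tnorm m t0 tg u.
Proof. intros Hg Hu Ht. destruct (Ph_spec t0 tg u t Hg Ht) as [i [_ ->]].
  apply vnorm_le_tnorm; auto. apply (grid_mono t0 tg Hg). Qed.

Lemma vnorm_sub_Ph_le m t0 tg u t : is_grid t0 tg -> InVQ1 m t0 tg u -> t0 <= t ->
  vnorm m (vsub (u t) (Ph tg u t)) <= grid_h tg * tnorm m t0 tg u.
Proof. intros Hg Hu Ht. destruct (Ph_spec t0 tg u t Hg Ht) as [i [Hi ->]].
  eapply Rle_trans. apply (grid_mean_value_ineq m t0 tg u i t); auto.
  pose proof (grid_step t0 tg Hg i). pose proof (tnorm_nonneg m t0 tg u Hu).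
  assert (norm1 m tg u <= tnorm m t0 tg u) by apply Rmax_r.
  apply Rle_trans with ((t - tg i) * tnorm m t0 tg u).
  - apply Rmult_le_compat_l; lra.
  - apply Rmult_le_compat_r; lra.
Qed.

(** * Estimates for the Adomian polynomials of N *)

Section AdomianEstimates.

Variables (m n : nat) (t0 : R) (N : R -> vec -> mat) (D : list nat -> R -> vec -> mat)
  (Nt : nat -> R -> R).
Hypothesis Hdep : depends_on_Rm m N.
Hypothesis HPD : IsPartialDerivs m n t0 N D.
Hypothesis Hjc : forall s, (1 <= length s <= n)%nat -> jointly_continuous m t0 (D s).
Hypothesis HN : forall j x, (j < n)%nat -> derivable_pt_lim (Nt j) x (Nt (S j) x).
Hypothesis HP : forall k x, (k <= n)%nat -> 0 <= x -> 0 <= Nt k x.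
Hypothesis Hbound : forall (k : nat) (t : R) (u : vec), (k <= n)%nat -> t0 <= t ->
  lsum (fun kk => multinom k kk * opnorm m (D (dirs_of kk 0) t u)) (mindices m k) <= Nt k (vnorm m u).
Variable t : R.
Hypothesis Ht : t0 <= t.

Lemma partials_depend_on_Rm e : (length e <= n)%nat -> inrange 0 m e -> forall z z', (forall c, (c < m)%nat -> z c = z' c) ->
  forall i j, (i < m)%nat -> (j < m)%nat -> D e t z i j = D e t z' i j.
Proof. destruct HPD as [HP0 HP1]. induction e as [|d e IH]; intros Hl Hr z z' Hz i j Hi Hj.
  - rewrite !HP0 by auto. rewrite (Hdep t z z' Hz). auto.
  - assert (Hd: (d < m)%nat) by (specialize (Hr d (or_introl eq_refl)); lia).
    assert (E: (fun tau => D e t (vadd z (vscale tau (unitv d))) i j) = (fun tau => D e t (vadd z' (vscale tau (unitv d))) i j)).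
    { apply functional_extensionality; intros tau. apply IH; auto. simpl in Hl; lia.
      intros x Hx; apply Hr; right; auto. intros c Hc. unfold vadd. rewrite Hz; auto. }
    apply (uniqueness_limite (fun tau => D e t (vadd z (vscale tau (unitv d))) i j) 0).
    apply HP1; auto; simpl in Hl; lia. rewrite E. apply HP1; auto; simpl in Hl; lia.
Qed.

Lemma partial_tower_bilin_field x y : partial_tower m n (bilin_field m D t x y).
Proof. split; [|split].
  - intros e d z He Hd. unfold bilin_field.
    destruct (all_lt m e) eqn:Ha.
    + assert (Nat.ltb d m = true) by (apply Nat.ltb_lt; auto). change (all_lt m (d :: e)) with (andb (Nat.ltb d m) (all_lt m e)).
      rewrite H, Ha. simpl. unfold bilin, dot, matvec. apply D_rsum. intros i Hi. apply D_scal.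
      apply D_rsum. intros j Hj. apply D_ext with (fun tau => x j * D e t (vadd z (vscale tau (unitv d))) i j).
      intros; ring. apply D_eqv with (x j * D (d :: e) t z i j). ring. apply D_scal.
      destruct HPD as [_ HP1]. apply HP1; auto.
    + change (all_lt m (d :: e)) with (andb (Nat.ltb d m) (all_lt m e)). rewrite Ha, Bool.andb_false_r. apply D_const.
  - intros e He z eps Heps. unfold bilin_field. destruct (all_lt m e) eqn:Ha.
    + apply bilin_continuous; auto. intros i j Hi Hj eps' Heps'.
      destruct (Hjc e He t z i j Ht Hi Hj eps' Heps') as [d [Hd Hd']]. exists d. split; auto.
      intros z' Hz'. apply Hd'; auto. rewrite Rminus_diag, Rabs_R0. auto.
    + exists 1. split. lra. intros. rewrite Rminus_diag, Rabs_R0. auto.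
  - intros e z z' He Hz. unfold bilin_field. destruct (all_lt m e) eqn:Ha; auto.
    unfold bilin, dot, matvec. apply rsum_ext. intros i Hi. f_equal. apply rsum_ext. intros j Hj. f_equal.
    apply partials_depend_on_Rm; auto. apply all_lt_spec; auto.
Qed.

(* The coefficients are symmetric (Clairaut), so the sum over all words collapses to the
   multinomial sum bounded by [Nt]. *)
Lemma bilin_field_contract_bound x y xs z : (length xs <= n)%nat ->
    Rabs (contract m (fun e => bilin_field m D t x y e z) xs) <= (vnorm m x * vnorm m y) * Nt (length xs) (vnorm m z) * prod_vnorm m xs.
Proof. intros Hl.
  eapply Rle_trans. apply contract_bound. apply Rmult_le_compat_r. apply prod_vnorm_nonneg.
  set (W := vnorm m x * vnorm m y).
  assert (HW: 0 <= W) by (apply Rmult_le_pos; apply vnorm_nonneg).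
  apply Rle_trans with (sum_words_from 0 m (length xs) (fun e => W * opnorm m (D e t z))).
  { apply sum_words_from_le. intros e He. unfold bilin_field. destruct (all_lt m e).
    - eapply Rle_trans. apply bilin_bound. unfold W. right; ring.
    - rewrite Rabs_R0. apply Rmult_le_pos; auto. apply opnorm_nonneg. }
  rewrite sum_words_from_scal. apply Rmult_le_compat_l; auto.
  rewrite sum_words_from_multinomial. apply Hbound; auto.
  intros e e' Hp He Hr. apply opnorm_eq. intros i j Hi Hj.
  assert (Hr': inrange 0 m e') by (intros d Hd; apply Hr; apply Permutation_in with e'; auto; apply Permutation_sym; auto).
  pose proof (partial_tower_perm m n (bilin_field m D t (unitv j) (unitv i)) (partial_tower_bilin_field _ _) e e' Hp ltac:(lia) Hr z) as E.
  unfold bilin_field in E. rewrite (proj2 (all_lt_spec m e) Hr), (proj2 (all_lt_spec m e') Hr') in E.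
  rewrite !bilin_unitv in E by auto. auto.
Qed.

Lemma bilin_adomN x y k v : (k <= n)%nat ->
  bilin m y (adomN m N t k v) x = kderiv (along_curve m (bilin_field m D t x y) k v []) k 0 / INR (fact k).
Proof. intros Hk.
  set (E := fun i j tau => N t (acurve m k v tau) i j).
  assert (HE: forall i j, (i < m)%nat -> (j < m)%nat -> exists G, is_deriv_chain k (E i j) G).
  { intros i j Hi Hj. replace (E i j) with (along_curve m (bilin_field m D t (unitv j) (unitv i)) k v []).
    apply (ex_deriv_chain_along_curve m n); auto. apply partial_tower_bilin_field.
    apply functional_extensionality; intros tau. unfold along_curve, E. simpl. unfold bilin_field. simpl.
    rewrite bilin_unitv by auto. destruct HPD as [HP0 _]. apply HP0; auto. }
  assert (EP: along_curve m (bilin_field m D t x y) k v [] = fun tau => rsum m (fun i => y i * rsum m (fun j => x j * E i j tau))).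
  { apply functional_extensionality; intros tau. unfold along_curve, E. simpl. unfold bilin_field. simpl. unfold bilin, dot, matvec.
    apply rsum_ext; intros i Hi. f_equal. apply rsum_ext; intros j Hj. destruct HPD as [HP0 _]. rewrite HP0; auto. ring. }
  rewrite EP. rewrite (kderiv_rsum k); auto.
  2:{ intros i Hi. apply ex_deriv_chain_scal. apply ex_deriv_chain_rsum. intros j Hj. apply ex_deriv_chain_scal. apply HE; auto. }
  unfold bilin, dot, matvec, adomN. unfold Rdiv. rewrite <- rsum_scalr. apply rsum_ext. intros i Hi.
  rewrite (kderiv_scal k). 2:{ apply ex_deriv_chain_rsum. intros j Hj. apply ex_deriv_chain_scal. apply HE; auto. } 2: auto.
  rewrite (kderiv_rsum k). 2:{ intros j Hj. apply ex_deriv_chain_scal. apply HE; auto. } 2: auto.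
  rewrite Rmult_assoc. f_equal. rewrite <- rsum_scalr. apply rsum_ext. intros j Hj.
  rewrite (kderiv_scal k) by (auto; apply HE; auto). unfold E. ring.
Qed.

Lemma opnorm_adomN_le k v a : (k < n)%nat ->
  (forall l, (l <= k)%nat -> vnorm m (v l) <= a l) -> (forall l, (l <= k)%nat -> 0 <= a l) ->
  opnorm m (adomN m N t k v) <= adomR (Nt O) k a.
Proof. intros Hk Hv Ha. change (adomR (Nt O) k a) with (kderiv (majorant Nt k a 0) k 0 / INR (fact k)).
  assert (Hf: 0 < INR (fact k)) by apply INR_fact_lt_0.
  apply opnorm_le_div; auto. apply (kderiv_majorant_nonneg Nt n); auto; lia.
  intros x y. rewrite bilin_adomN by lia. unfold Rdiv. rewrite Rmult_assoc, Rinv_l, Rmult_1_r by lra.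
  assert (HW: 0 <= vnorm m x * vnorm m y) by (apply Rmult_le_pos; apply vnorm_nonneg).
  pose proof (along_curve_kderiv_bound Nt n HN HP m _ _ (partial_tower_bilin_field x y) HW
    (bilin_field_contract_bound x y) k v a Hv Ha k [] ltac:(simpl; lia)) as H.
  simpl in H. lra.
Qed.

Lemma opnorm_adomN_sub_le k v w c h : (k + 2 <= n)%nat -> 0 <= h ->
  (forall l, (l <= k)%nat -> vnorm m (v l) <= c l) ->
  (forall l, (l <= k)%nat -> vnorm m (w l) <= c l) ->
  (forall l, (l <= k)%nat -> vnorm m (vsub (v l) (w l)) <= h * c l) ->
  (forall l, (l <= k)%nat -> 0 <= c l) ->
  opnorm m (msub (adomN m N t k v) (adomN m N t k w)) <= h * adomR (fun x => Nt 1%nat x * x) k c.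
Proof. intros Hk Hh Hv Hw Hvw Hc.
  change (adomR (fun x => Nt 1%nat x * x) k c) with (kderiv (majorant_g Nt k c 0) k 0 / INR (fact k)).
  assert (Hf: 0 < INR (fact k)) by apply INR_fact_lt_0.
  rewrite Rmult_div_assoc. apply opnorm_le_div; auto.
  { apply Rmult_le_pos; auto. apply (kderiv_majorant_g_nonneg Nt n); auto; lia. }
  intros x y. rewrite bilin_msub, !bilin_adomN by lia.
  rewrite <- Rdiv_minus_distr. unfold Rdiv. rewrite Rmult_assoc, Rinv_l, Rmult_1_r by lra.
  rewrite <- (kderiv_minus k); auto; try (apply (ex_deriv_chain_along_curve m n);
    [apply partial_tower_bilin_field | simpl; lia]).
  assert (HW: 0 <= vnorm m x * vnorm m y) by (apply Rmult_le_pos; apply vnorm_nonneg).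
  pose proof (along_curve_diff_kderiv_bound Nt n HN HP m _ _ (partial_tower_bilin_field x y) HW
    (bilin_field_contract_bound x y) k v w c h Hh Hv Hw Hvw Hc k [] ltac:(simpl; lia)) as H.
  simpl in H. lra.
Qed.

End AdomianEstimates.

Theorem lemma4 (m n : nat) (t0 : R)
  (N : R -> vec -> mat) (D : list nat -> R -> vec -> mat)
  (Nt : nat -> R -> R) :
  (1 <= n)%nat ->
  depends_on_Rm m N ->
  continuous_in_t m t0 N ->
  IsPartialDerivs m n t0 N D ->
  (forall s, (1 <= length s <= n)%nat -> jointly_continuous m t0 (D s)) ->
  (forall (j : nat) (x : R), (j < n)%nat -> derivable_pt_lim (Nt j) x (Nt (S j) x)) ->
  continuity (Nt n) ->
  (forall (k : nat) (x : R), (k <= n)%nat -> 0 <= x -> 0 <= Nt k x) ->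
  (forall (k : nat) (t : R) (u : vec), (k <= n)%nat -> t0 <= t ->
     lsum (fun kk => multinom k kk * opnorm m (D (dirs_of kk 0) t u)) (mindices m k)
       <= Nt k (vnorm m u)) ->
  forall t, t0 <= t ->
  (forall (k : nat) (u : nat -> R -> vec), (k <= n - 1)%nat ->
     (forall l, (l <= k)%nat -> InVQ m t0 (u l)) ->
     opnorm m (adomN m N t k (fun l => u l t))
       <= adomR (Nt O) k (fun l => norm0 m t0 (u l))) /\
  (forall (tg : nat -> R), is_grid t0 tg ->
   forall (k : nat) (u : nat -> R -> vec), (k + 2 <= n)%nat ->
     (forall l, (l <= k)%nat -> InVQ1 m t0 tg (u l)) ->
     opnorm m (msub (adomN m N t k (fun l => u l t))
                    (adomN m N t k (fun l => Ph tg (u l) t)))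
       <= grid_h tg * adomR (fun x => Nt 1%nat x * x) k (fun l => tnorm m t0 tg (u l))).
Proof.
  (* The estimates are pointwise in t. *)
  intros Hn Hdep _ HPD Hjc HN _ HP Hbound t Ht. split.
  - intros k u Hk Hu. apply (opnorm_adomN_le m n t0 N D Nt); auto; try lia.
    + intros l Hl. apply norm0_ub; auto. apply Hu; auto.
    + intros l Hl. apply norm0_nonneg, Hu; auto.
  - intros tg Hg k u Hk Hu. apply (opnorm_adomN_sub_le m n t0 N D Nt); auto.
    + apply (grid_h_nonneg t0); auto.
    + intros l Hl. apply vnorm_le_tnorm; auto.
    + intros l Hl. apply vnorm_Ph_le_tnorm; auto.
    + intros l Hl. apply vnorm_sub_Ph_le; auto.
    + intros l Hl. apply tnorm_nonneg; auto.
Qed.
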